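(* Let $n\ge 3$ be an odd integer and $(\mathcal{C},\Sigma)$ a tensor $n$-angulated category, with Grothendieck ring $K_0(\mathcal{C})$ (multiplication $[A][B]=[A\otimes B]$). Then the maps $\mathcal{A}\mapsto\operatorname{Im}K_0(\mathcal{A})$ and $H\mapsto\mathcal{A}_H$ give mutually inverse bijections (a) between the set of $n$-angulated tensor ideals of $\mathcal{C}$ that are both complete and dense and the set of ideals of the ring $K_0(\mathcal{C})$; and (b) between the set of $n$-angulated tensor prime ideals of $\mathcal{C}$ that are both complete and dense and the set of prime ideals of $K_0(\mathcal{C})$. Here $\mathcal{A}_H$ is the full subcategory of $\mathcal{C}$ consisting of the objects $A$ with $[A]\in H$ (with $n$-angles the $n$-angles of $\mathcal{C}$ all of whose objects lie in $\mathcal{A}_H$).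
   Context: All categories are small. Fix an integer $n\ge 3$. Let $\mathcal{C}$ be an additive category with an automorphism $\Sigma$. An $n$-$\Sigma$-sequence in $\mathcal{C}$ is a diagram $A_1\xrightarrow{\alpha_1}A_2\xrightarrow{\alpha_2}\cdots\xrightarrow{\alpha_{n-1}}A_n\xrightarrow{\alpha_n}\Sigma A_1$. Its left rotation is $A_2\xrightarrow{\alpha_2}\cdots\xrightarrow{\alpha_n}\Sigma A_1\xrightarrow{(-1)^n\Sigma\alpha_1}\Sigma A_2$. A morphism from $(A_\bullet,\alpha)$ to $(B_\bullet,\beta)$ is a tuple $(\varphi_1,\dots,\varphi_n)$, $\varphi_i:A_i\to B_i$, with $\beta_i\varphi_i=\varphi_{i+1}\alpha_i$ for $1\le i\le n-1$ and $\beta_n\varphi_n=(\Sigma\varphi_1)\alpha_n$; it is an isomorphism if all $\varphi_i$ are isomorphisms. Direct sums of sequences are taken termwise. $(\mathcal{C},\Sigma)$ is $n$-angulated if it is equipped with a collection $\mathscr N$ of $n$-$\Sigma$-sequences, called $n$-angles, such that: (N1)(a) $\mathscr N$ is closed under direct sums, direct summands and isomorphisms of $n$-$\Sigma$-sequences; (b) for every object $A$, the trivial sequence $A\xrightarrow{1}A\to0\to\cdots\to0\to\Sigma A$ is in $\mathscr N$; (c) every morphism $A_1\to A_2$ is the first morphism of some $n$-angle; (N2) an $n$-$\Sigma$-sequence is in $\mathscr N$ iff its left rotation is; (N3) given $n$-angles $(A_\bullet,\alpha),(B_\bullet,\beta)$ and $\varphi_1:A_1\to B_1$, $\varphi_2:A_2\to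 B_2$ with $\beta_1\varphi_1=\varphi_2\alpha_1$, there exist $\varphi_3,\dots,\varphi_n$ making $(\varphi_1,\dots,\varphi_n)$ a morphism; (N4) in (N3) the $\varphi_i$ can be chosen so that the mapping cone $A_2\oplus B_1\to A_3\oplus B_2\to\cdots\to\Sigma A_1\oplus B_n\to\Sigma A_2\oplus\Sigma B_1$, with maps $\left[\begin{smallmatrix}-\alpha_{i+1}&0\\ \varphi_{i+1}&\beta_i\end{smallmatrix}\right]$ ($1\le i\le n-1$) and last map $\left[\begin{smallmatrix}-\Sigma\alpha_1&0\\ \Sigma\varphi_1&\beta_n\end{smallmatrix}\right]$, is an $n$-angle. Grothendieck group: $F(\mathcal{C})$ is the free abelian group on isomorphism classes $\langle A\rangle$ of objects; for an $n$-angle $A_\bullet$, $\chi(A_\bullet)=\sum_{i=1}^n(-1)^{i+1}\langle A_i\rangle$; $R(\mathcal{C})$ is generated by all $\chi(A_\bullet)$, together with $\langle 0\rangle$ when $n$ is even; $K_0(\mathcal{C})=F(\mathcal{C})/R(\mathcal{C})$, $[A]$ the class of $\langle A\rangle$. An $n$-angulated category $(\mathcal{C},\Sigma)$ is tensor $n$-angulated if it carries a symmetric monoidal structure $(\otimes,I,\alpha,\lambda,\rho,\gamma)$ with $\otimes$ an additive bifunctor, such that: (1) there are natural isomorphisms $l:A\otimes\Sigma B\to\Sigma(A\otimes B)$ and $r:\Sigma A\otimes B\to\Sigma(A\otimes B)$; (2) for every object $A$ and every $n$-angle $A_1\xrightarrow{\alpha_1}\cdots\xrightarrow{\alpha_{n-1}}A_n\xrightarrow{\alpha_n}\Sigma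 A_1$, the sequences $A\otimes A_1\xrightarrow{1\otimes\alpha_1}\cdots\xrightarrow{1\otimes\alpha_{n-1}}A\otimes A_n\xrightarrow{l\circ(1\otimes\alpha_n)}\Sigma(A\otimes A_1)$ and $A_1\otimes A\xrightarrow{\alpha_1\otimes1}\cdots\xrightarrow{\alpha_{n-1}\otimes1}A_n\otimes A\xrightarrow{r\circ(\alpha_n\otimes1)}\Sigma(A_1\otimes A)$ are $n$-angles; (3) $\lambda_{\Sigma A}=\Sigma\lambda_A\circ l$ and $\rho_{\Sigma A}=\Sigma\rho_A\circ r$; (4) $\Sigma l\circ r=-\,\Sigma r\circ l$ as maps $\Sigma A\otimes\Sigma B\to\Sigma^2(A\otimes B)$. For $n$ odd, $K_0(\mathcal{C})$ is a commutative ring with $[A][B]=[A\otimes B]$. An additive functor $L:\mathcal{C}\to\mathcal{C}'$ between $n$-angulated categories is $n$-angulated if there is a natural isomorphism $\eta:L\circ\Sigma\to\Sigma'\circ L$ such that $L$ sends each $n$-angle $(A_\bullet,\alpha)$ to the $n$-angle $LA_1\xrightarrow{L\alpha_1}\cdots\xrightarrow{L\alpha_{n-1}}LA_n\xrightarrow{\eta\circ L\alpha_n}\Sigma'LA_1$. An $n$-angulated subcategory of $(\mathcal{C},\Sigma)$ is a full subcategory $\mathcal{A}$, closed under isomorphisms, on which $\Sigma$ restricts to an automorphism, equipped with $n$-angles making $(\mathcal{A},\Sigma)$ $n$-angulated, such that the inclusion $\mathcal{A}\to\mathcal{C}$ is $n$-angulated. $\mathcal{A}$ is dense if every object of $\mathcal{C}$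 is a direct summand of an object of $\mathcal{A}$; complete if whenever an $n$-angle $A_1\to\cdots\to A_n\to\Sigma A_1$ in $\mathcal{C}$ has $n-1$ of $A_1,\dots,A_n$ in $\mathcal{A}$, the remaining one is in $\mathcal{A}$. An $n$-angulated tensor ideal is an $n$-angulated subcategory $\mathcal{A}$ such that $C\otimes A\in\mathcal{A}$ for all $A\in\mathcal{A}$, $C\in\mathcal{C}$; it is an $n$-angulated tensor prime ideal if moreover $C\otimes C'\in\mathcal{A}$ (for $C,C'\in\mathcal{C}$) implies $C\in\mathcal{A}$ or $C'\in\mathcal{A}$. $\operatorname{Im}K_0(\mathcal{A})$ is the image of the homomorphism $K_0(\mathcal{A})\to K_0(\mathcal{C})$, $[A]\mapsto[A]$, induced by the inclusion. *)

From HB Require Import structures.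
From mathcomp Require Import all_boot all_algebra.
From mathcomp Require Import boolp.
Set Implicit Arguments. Unset Strict Implicit. Unset Printing Implicit Defensive.
Import GRing.Theory.
Local Open Scope ring_scope.

Record Cat := {
  Obj :> Type;
  Hom : Obj -> Obj -> zmodType;
  comp : forall A B D : Obj, Hom B D -> Hom A B -> Hom A D;
  idm : forall A : Obj, Hom A A }.
Arguments Hom {c}.
Arguments comp {c A B D}.
Arguments idm {c}.
Notation "g \oc f" := (comp g f) (at level 40, left associativity).

Section Cats.
Variable C : Cat.

Definition is_zero_obj (Z : C) : Prop :=
  (forall A (f g : Hom A Z), f = g) /\ (forall A (f g : Hom Z A), f = g).

Definition biprod (A B S : C) (i1 : Hom A S) (i2 : Hom B S)
  (p1 : Hom S A) (p2 : Hom S B) : Prop :=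
  [/\ p1 \oc i1 = idm A, p2 \oc i2 = idm B, p1 \oc i2 = 0, p2 \oc i1 = 0
    & i1 \oc p1 + i2 \oc p2 = idm S].

Definition is_iso (A B : C) (f : Hom A B) : Prop :=
  exists g : Hom B A, g \oc f = idm A /\ f \oc g = idm B.

Definition isomorphic (A B : C) : Prop := exists f : Hom A B, is_iso f.

Definition additive_cat : Prop :=
  [/\ (forall (A B D E : C) (h : Hom D E) (g : Hom B D) (f : Hom A B),
          h \oc (g \oc f) = (h \oc g) \oc f),
      (forall (A B : C) (f : Hom A B), idm B \oc f = f) /\
      (forall (A B : C) (f : Hom A B), f \oc idm A = f),
      (forall (A B D : C) (g1 g2 : Hom B D) (f : Hom A B),
          (g1 + g2) \oc f = g1 \oc f + g2 \oc f),
      (forall (A B D : C) (g : Hom B D) (f1 f2 : Hom A B),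
          g \oc (f1 + f2) = g \oc f1 + g \oc f2)
    & ((exists Z : C, is_zero_obj Z)
    /\ (forall A B : C, exists (S : C) (i1 : Hom A S) (i2 : Hom B S)
          (p1 : Hom S A) (p2 : Hom S B), biprod i1 i2 p1 p2))].

End Cats.

Record Shift (C : Cat) := {
  sh :> C -> C;
  shm : forall A B : C, Hom A B -> Hom (sh A) (sh B) }.
Arguments shm {C} s {A B}.

Definition shift_ok (C : Cat) (S : Shift C) : Prop :=
  [/\ (forall A : C, shm S (idm A) = idm (S A)),
      (forall (A B D : C) (g : Hom B D) (f : Hom A B),
          shm S (g \oc f) = shm S g \oc shm S f),
      (forall (A B : C) (f g : Hom A B), shm S (f + g) = shm S f + shm S g),
      bijective (sh S)
    & (forall A B : C, bijective (@shm C S A B))].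

(* n-Sigma-sequences, 0-indexed: A_1..A_n is ob 0 .. ob (n.-2.+1).   *)
(* Values of ob/mor outside this range are irrelevant junk.           *)
Record nsigseq (C : Cat) (S : Shift C) (n : nat) := {
  ob : nat -> C;
  mor : forall i, Hom (ob i) (ob i.+1);        (* alpha_{i+1} for i < n-1 *)
  lst : Hom (ob n.-2.+1) (S (ob 0)) }.
Arguments ob {C S n}.
Arguments mor {C S n}.
Arguments lst {C S n}.

Section Seqs.
Variables (C : Cat) (S : Shift C) (n : nat).
Local Notation L := n.-2.+1.
Local Notation nsigseq := (nsigseq S n).

Definition seq_in (P : C -> Prop) (X : nsigseq) : Prop :=
  forall i, (i <= L)%N -> P (ob X i).

Definition is_smor (X Y : nsigseq) (phi : forall i, Hom (ob X i) (ob Y i)) :=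
  (forall i, (i < L)%N -> mor Y i \oc phi i = phi i.+1 \oc mor X i) /\
  lst Y \oc phi L = shm S (phi 0%N) \oc lst X.

Definition siso (X Y : nsigseq) : Prop :=
  exists phi : forall i, Hom (ob X i) (ob Y i), is_smor phi /\ forall i, (i <= L)%N -> is_iso (phi i).

Definition is_dsum (X Y Z : nsigseq) : Prop :=
  exists (i1 : forall i, Hom (ob X i) (ob Z i)) (i2 : forall i, Hom (ob Y i) (ob Z i))
         (p1 : forall i, Hom (ob Z i) (ob X i)) (p2 : forall i, Hom (ob Z i) (ob Y i)),
    [/\ is_smor i1, is_smor i2, is_smor p1, is_smor p2
      & forall i, (i <= L)%N -> biprod (i1 i) (i2 i) (p1 i) (p2 i)].

(* Y is (isomorphic, via the displayed isomorphisms, to) the left rotation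
   A_2 -> ... -> A_n -> Sigma A_1 -(-1)^n Sigma alpha_1-> Sigma A_2 of X *)
Definition is_rot (X Y : nsigseq) : Prop :=
  exists (psi : forall i, Hom (ob Y i) (ob X i.+1)) (psiL : Hom (ob Y L) (S (ob X 0%N))),
    [/\ forall i, (i < L)%N -> is_iso (psi i),
        is_iso psiL,
        forall i, (i.+1 < L)%N -> psi i.+1 \oc mor Y i = mor X i.+1 \oc psi i,
        psiL \oc mor Y n.-2 = lst X \oc psi n.-2
      & shm S (psi 0%N) \oc lst Y
          = (if odd n then - shm S (mor X 0%N) else shm S (mor X 0%N)) \oc psiL].

(* X is a trivial sequence  A -1-> A -> 0 -> ... -> 0 -> Sigma A
   (up to the isomorphism given by mor X 0) *)
Definition is_triv (X : nsigseq) : Prop :=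
  is_iso (mor X 0%N) /\ forall i, (2 <= i <= L)%N -> is_zero_obj (ob X i).

Definition is_cone (X Y : nsigseq) (phi : forall i, Hom (ob X i) (ob Y i)) (Z : nsigseq) :=
  exists (jl : forall i, Hom (ob X i.+1) (ob Z i)) (jr : forall i, Hom (ob Y i) (ob Z i))
         (ql : forall i, Hom (ob Z i) (ob X i.+1)) (qr : forall i, Hom (ob Z i) (ob Y i))
         (jlL : Hom (S (ob X 0%N)) (ob Z L)) (jrL : Hom (ob Y L) (ob Z L))
         (qlL : Hom (ob Z L) (S (ob X 0%N))) (qrL : Hom (ob Z L) (ob Y L)),
    [/\ forall i, (i < L)%N -> biprod (jl i) (jr i) (ql i) (qr i),
        biprod jlL jrL qlL qrL,
        forall i, (i.+1 < L)%N ->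
          mor Z i = jl i.+1 \oc (- mor X i.+1) \oc ql i
                    + jr i.+1 \oc phi i.+1 \oc ql i + jr i.+1 \oc mor Y i \oc qr i,
        mor Z n.-2 = jlL \oc (- lst X) \oc ql n.-2
                    + jrL \oc phi L \oc ql n.-2 + jrL \oc mor Y n.-2 \oc qr n.-2
      & lst Z = shm S (jl 0%N) \oc (- shm S (mor X 0%N)) \oc qlL
                + shm S (jr 0%N) \oc shm S (phi 0%N) \oc qlL + shm S (jr 0%N) \oc lst Y \oc qrL].

(* NN is an n-angulation of the full subcategory on the objects
   satisfying P (take P := fun _ => True for the whole category). *)
Definition nangulation (P : C -> Prop) (NN : nsigseq -> Prop) : Prop :=
  [/\ (forall X, NN X -> seq_in P X),
      ((forall X Y, seq_in P Y -> NN X -> siso X Y -> NN Y) /\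
      (forall X Y Z, seq_in P Z -> NN X -> NN Y -> is_dsum X Y Z -> NN Z) /\
      (forall X Y Z, seq_in P X -> seq_in P Y -> NN Z -> is_dsum X Y Z -> NN X) /\
      (forall X, seq_in P X -> is_triv X -> NN X)),
      (forall (A B : C) (f : Hom A B), P A -> P B ->
         exists X, NN X /\ exists (u0 : Hom A (ob X 0%N)) (u1 : Hom B (ob X 1%N)),
           [/\ is_iso u0, is_iso u1 & mor X 0%N \oc u0 = u1 \oc f]) /\
      (forall X Y, seq_in P X -> seq_in P Y -> is_rot X Y -> (NN X <-> NN Y)),
      (forall X Y, NN X -> NN Y -> forall (f0 : Hom (ob X 0%N) (ob Y 0%N))
          (f1 : Hom (ob X 1%N) (ob Y 1%N)), mor Y 0%N \oc f0 = f1 \oc mor X 0%N ->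
          exists phi : forall i, Hom (ob X i) (ob Y i), [/\ is_smor phi, phi 0%N = f0 & phi 1%N = f1])
    &
      (forall X Y, NN X -> NN Y -> forall (f0 : Hom (ob X 0%N) (ob Y 0%N))
          (f1 : Hom (ob X 1%N) (ob Y 1%N)), mor Y 0%N \oc f0 = f1 \oc mor X 0%N ->
          exists phi : forall i, Hom (ob X i) (ob Y i), [/\ is_smor phi, phi 0%N = f0, phi 1%N = f1 &
             forall Z, seq_in P Z -> is_cone phi Z -> NN Z])].

Definition twist (X : nsigseq) (e : Hom (S (ob X 0%N)) (S (ob X 0%N))) : nsigseq :=
  {| ob := ob X; mor := mor X; lst := e \oc lst X |}.

End Seqs.

Record TensorData (C : Cat) (S : Shift C) := {
  tobj : C -> C -> C;
  thom : forall A B A' B' : C, Hom A A' -> Hom B B' -> Hom (tobj A B) (tobj A' B');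
  tunit : C;
  tass : forall A B D : C, Hom (tobj (tobj A B) D) (tobj A (tobj B D));
  tlu : forall A : C, Hom (tobj tunit A) A;
  tru : forall A : C, Hom (tobj A tunit) A;
  tsym : forall A B : C, Hom (tobj A B) (tobj B A);
  lsh : forall A B : C, Hom (tobj A (S B)) (S (tobj A B));
  rsh : forall A B : C, Hom (tobj (S A) B) (S (tobj A B)) }.
Arguments tobj {C S}.
Arguments thom {C S} t {A B A' B'}.
Arguments tunit {C S}.
Arguments tass {C S}.
Arguments tlu {C S}.
Arguments tru {C S}.
Arguments tsym {C S}.
Arguments lsh {C S}.
Arguments rsh {C S}.

Section Tensor.
Variables (C : Cat) (S : Shift C) (n : nat) (T : TensorData S).
Local Notation L := n.-2.+1.
Local Notation "A ** B" := (tobj T A B) (at level 30).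

Definition tens_l (A : C) (X : nsigseq S n) : nsigseq S n :=
  {| ob := fun i => A ** ob X i;
     mor := fun i => thom T (idm A) (mor X i);
     lst := lsh T A (ob X 0%N) \oc thom T (idm A) (lst X) |}.
Definition tens_r (A : C) (X : nsigseq S n) : nsigseq S n :=
  {| ob := fun i => ob X i ** A;
     mor := fun i => thom T (mor X i) (idm A);
     lst := rsh T (ob X 0%N) A \oc thom T (lst X) (idm A) |}.

Definition tensor_nang (N : nsigseq S n -> Prop) : Prop :=
  [/\
      (forall A B : C, thom T (idm A) (idm B) = idm (A ** B))
    /\ (forall (A B D A' B' D' : C) (g : Hom B D) (f : Hom A B)
          (g' : Hom B' D') (f' : Hom A' B'),
          thom T (g \oc f) (g' \oc f') = thom T g g' \oc thom T f f')
    /\ (forall (A B A' B' : C) (f g : Hom A B) (h : Hom A' B'),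
          thom T (f + g) h = thom T f h + thom T g h)
    /\ (forall (A B A' B' : C) (h : Hom A B) (f g : Hom A' B'),
          thom T h (f + g) = thom T h f + thom T h g),
      (forall A B D : C, is_iso (tass T A B D))
    /\ (forall A : C, is_iso (tlu T A))
    /\ (forall A : C, is_iso (tru T A))
    /\ (forall A B : C, is_iso (tsym T A B))
    /\ (forall (A B D A' B' D' : C) (f : Hom A A') (g : Hom B B') (h : Hom D D'),
          tass T A' B' D' \oc thom T (thom T f g) h = thom T f (thom T g h) \oc tass T A B D)
    /\ (forall (A B : C) (f : Hom A B), tlu T B \oc thom T (idm (tunit T)) f = f \oc tlu T A)
    /\ (forall (A B : C) (f : Hom A B), tru T B \oc thom T f (idm (tunit T)) = f \oc tru T A)
    /\ (forall (A B A' B' : C) (f : Hom A A') (g : Hom B B'),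
          tsym T A' B' \oc thom T f g = thom T g f \oc tsym T A B)
    /\ (forall A B D E : C,
          tass T A B (D ** E) \oc tass T (A ** B) D E
          = thom T (idm A) (tass T B D E) \oc tass T A (B ** D) E \oc thom T (tass T A B D) (idm E))
    /\ (forall A B : C,
          thom T (idm A) (tlu T B) \oc tass T A (tunit T) B = thom T (tru T A) (idm B))
    /\ (forall A B D : C,
          tass T B D A \oc tsym T A (B ** D) \oc tass T A B D
          = thom T (idm B) (tsym T A D) \oc tass T B A D \oc thom T (tsym T A B) (idm D))
    /\ (forall A B : C, tsym T B A \oc tsym T A B = idm (A ** B)),
      (forall A B : C, is_iso (lsh T A B))
    /\ (forall A B : C, is_iso (rsh T A B))
    /\ (forall (A B A' B' : C) (f : Hom A A') (g : Hom B B'),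
          lsh T A' B' \oc thom T f (shm S g) = shm S (thom T f g) \oc lsh T A B)
    /\ (forall (A B A' B' : C) (f : Hom A A') (g : Hom B B'),
          rsh T A' B' \oc thom T (shm S f) g = shm S (thom T f g) \oc rsh T A B),
      (forall (A : C) (X : nsigseq S n), N X -> N (tens_l A X) /\ N (tens_r A X)) /\
      (forall A : C, tlu T (S A) = shm S (tlu T A) \oc lsh T (tunit T) A
                  /\ tru T (S A) = shm S (tru T A) \oc rsh T A (tunit T))
    &
      (forall A B : C,
          shm S (lsh T A B) \oc rsh T A (S B) = - (shm S (rsh T A B) \oc lsh T (S A) B))].

End Tensor.

Section Groth.
Variables (C : Cat) (S : Shift C) (n : nat) (N : nsigseq S n -> Prop) (T : TensorData S).

(* formal Z-linear combinations sum_k m_k <A_k> *)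
Definition Formal := seq (int * C).
Definition fneg (x : Formal) : Formal := [seq (- p.1, p.2) | p <- x].
(* coefficient of the isomorphism class of B: the image in F(C) *)
Definition fcoef (x : Formal) (B : C) : int :=
  \sum_(p <- x) (if `[< isomorphic p.2 B >] then p.1 else 0).
Definition chi (X : nsigseq S n) : Formal :=
  [seq (((-1) ^+ i)%R, ob X i) | i <- iota 0 n].
Definition fmul (x y : Formal) : Formal :=
  [seq (p.1 * q.1, tobj T p.2 q.2) | p <- x, q <- y].

Inductive inR : Formal -> Prop :=
  | inR_chi X : N X -> inR (chi X)
  | inR_zero (Z : C) : ~~ odd n -> is_zero_obj Z -> inR [:: (1, Z)]
  | inR_nil : inR [::]
  | inR_add x y : inR x -> inR y -> inR (x ++ y)
  | inR_neg x : inR x -> inR (fneg x)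
  | inR_eqF x y : (forall B, fcoef x B = fcoef y B) -> inR x -> inR y.

(* equality in K_0(C) = F(C)/R(C) *)
Definition k0eq (x y : Formal) : Prop := inR (x ++ fneg y).

(* ideals of the commutative ring K_0(C), as k0eq-saturated predicates *)
Definition K0_ideal (H : Formal -> Prop) : Prop :=
  [/\ (forall x y, k0eq x y -> H x -> H y),
      H [::],
      (forall x y, H x -> H y -> H (x ++ y)),
      (forall x, H x -> H (fneg x))
    & (forall r x, H x -> H (fmul r x))].

Definition K0_prime (H : Formal -> Prop) : Prop :=
  [/\ K0_ideal H, ~ H [:: (1, tunit T)]
    & (forall x y, H (fmul x y) -> H x \/ H y)].

Definition ImK0 (P : C -> Prop) : Formal -> Prop :=
  fun x => exists y : Formal, foldr (fun p acc => P p.2 /\ acc) True y /\ k0eq x y.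

Definition AH (H : Formal -> Prop) : C -> Prop := fun A => H [:: (1, A)].

Definition nsubcat_with (P : C -> Prop) (NA : nsigseq S n -> Prop) : Prop :=
  [/\ (forall A B : C, isomorphic A B -> P A -> P B),
      (exists Z : C, is_zero_obj Z /\ P Z) /\
      (forall A B : C, P A -> P B -> exists (D : C) (i1 : Hom A D) (i2 : Hom B D)
          (p1 : Hom D A) (p2 : Hom D B), biprod i1 i2 p1 p2 /\ P D),
      (forall A : C, P A <-> P (S A)),
      nangulation P NA
    & (* the inclusion is an n-angulated functor *)
      exists eta : forall A : C, Hom (S A) (S A),
        [/\ forall A, P A -> is_iso (eta A),
            forall (A B : C) (f : Hom A B), P A -> P B -> eta B \oc shm S f = shm S f \oc eta A
          & forall X, NA X -> N (twist (eta (ob X 0%N)))]].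

Definition tensor_ideal (P : C -> Prop) : Prop :=
  forall A B : C, P A -> P (tobj T B A).

Definition tensor_prime (P : C -> Prop) : Prop :=
  forall A B : C, P (tobj T A B) -> P A \/ P B.

Definition dense (P : C -> Prop) : Prop :=
  forall B : C, exists (A B' : C) (i1 : Hom B A) (i2 : Hom B' A)
    (p1 : Hom A B) (p2 : Hom A B'), P A /\ biprod i1 i2 p1 p2.

Definition complete (P : C -> Prop) : Prop :=
  forall X, N X -> forall j, (j <= n.-2.+1)%N ->
    (forall i, (i <= n.-2.+1)%N -> i != j -> P (ob X i)) -> P (ob X j).

Definition cd_tensor_ideal_with (P : C -> Prop) (NA : nsigseq S n -> Prop) : Prop :=
  [/\ nsubcat_with P NA, tensor_ideal P, complete P & dense P].

Definition cd_tensor_ideal (P : C -> Prop) : Prop :=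
  exists NA, cd_tensor_ideal_with P NA.

Definition restrN (P : C -> Prop) : nsigseq S n -> Prop :=
  fun X => N X /\ seq_in P X.

End Groth.

Definition proper_subcat (C : Cat) (P : C -> Prop) : Prop := exists A : C, ~ P A.

From Pilot Require Import Defs.
From HB Require Import structures.
From mathcomp Require Import all_boot all_algebra.
From mathcomp Require Import boolp zify ring.
(* Re-imported so that [\oc] is the composition of [Defs], not the one of [vector]. *)
From Pilot Require Import Defs.
Set Implicit Arguments. Unset Strict Implicit. Unset Printing Implicit Defensive.
Import GRing.Theory Num.Theory.
Local Open Scope ring_scope.

(* Every class of K_0(C) is the class [A] of a single object: [A] + [B] = [A (+) B], and
   since n is odd the rotated trivial n-angle A -> 0 -> ... -> 0 -> Sigma A -> Sigma A
   gives [Sigma A] = - [A].  Hence an ideal H of K_0(C) is recovered from A_H, and A_H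
   is a complete dense tensor ideal: completeness comes from the alternating sum chi,
   density from [A (+) Sigma A] = 0.
   Conversely let P be complete, dense and closed under sums, and call x stably P-balanced
   when, writing x = sum lp - sum ln, there are c, c' in P with
   (+)lp (+) c ~ (+)ln (+) c'.  Stably P-balanced elements form a subgroup of F(C)
   containing the split relations and the classes of P.  It also contains every
   n-angle relation chi(X): adding trivial n-angles (density) makes all but the last
   term of X lie in P, completeness then puts the last term in P, and adding trivial
   n-angles changes chi(X) only by split relations.  If [A] = x in K_0(C) with x in
   Im K_0(P), then [A] - x lies in that subgroup, so A (+) Q ~ Q' for some Q, Q' in P,
   and completeness yields A in P. *)

Section Additive.
Variable C : Cat.
Hypothesis HC : additive_cat C.

Lemma compoA (A B D E : C) (h : Hom D E) (g : Hom B D) (f : Hom A B) :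
  h \oc (g \oc f) = (h \oc g) \oc f.
Proof. by case: HC => H _ _ _ _; apply: H. Qed.
Lemma comp1l (A B : C) (f : Hom A B) : idm B \oc f = f.
Proof. by case: HC => _ [H _] _ _ _; apply: H. Qed.
Lemma comp1r (A B : C) (f : Hom A B) : f \oc idm A = f.
Proof. by case: HC => _ [_ H] _ _ _; apply: H. Qed.
Lemma compDl (A B D : C) (g1 g2 : Hom B D) (f : Hom A B) :
  (g1 + g2) \oc f = g1 \oc f + g2 \oc f.
Proof. by case: HC => _ _ H _ _; apply: H. Qed.
Lemma compDr (A B D : C) (g : Hom B D) (f1 f2 : Hom A B) :
  g \oc (f1 + f2) = g \oc f1 + g \oc f2.
Proof. by case: HC => _ _ _ H _; apply: H. Qed.
Lemma comp0l (A B D : C) (f : Hom A B) : (0 : Hom B D) \oc f = 0.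
Proof. by apply: (addrI ((0 : Hom B D) \oc f)); rewrite -compDl !addr0. Qed.
Lemma comp0r (A B D : C) (g : Hom B D) : g \oc (0 : Hom A B) = 0.
Proof. by apply: (addrI (g \oc (0 : Hom A B))); rewrite -compDr !addr0. Qed.
Lemma compNl (A B D : C) (g : Hom B D) (f : Hom A B) : (- g) \oc f = - (g \oc f).
Proof. by apply: (addrI (g \oc f)); rewrite -compDl !subrr comp0l. Qed.
Lemma compNr (A B D : C) (g : Hom B D) (f : Hom A B) : g \oc (- f) = - (g \oc f).
Proof. by apply: (addrI (g \oc f)); rewrite -compDr !subrr comp0r. Qed.

Ltac cnorm := repeat progress (rewrite ?compDl ?compDr ?compNl ?compNr ?comp0l ?comp0r
  -?compoA ?comp1l ?comp1r ?addr0 ?add0r ?oppr0 ?subr0 ?sub0r).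

Lemma iso_id (A : C) : is_iso (idm A).
Proof. by exists (idm A); rewrite comp1l. Qed.
Lemma iso_comp (A B D : C) (f : Hom A B) (g : Hom B D) :
  is_iso f -> is_iso g -> is_iso (g \oc f).
Proof.
move=> [f' [e1 e2]] [g' [e3 e4]]; exists (f' \oc g'); split.
  by rewrite -compoA (compoA g') e3 comp1l.
by rewrite -compoA (compoA f) e2 comp1l.
Qed.
Lemma iso_refl (A : C) : isomorphic A A.
Proof. exists (idm A); exact: iso_id. Qed.
Lemma iso_sym (A B : C) : isomorphic A B -> isomorphic B A.
Proof. by move=> [f [g [e1 e2]]]; exists g, f. Qed.
Lemma iso_trans (A B D : C) : isomorphic A B -> isomorphic B D -> isomorphic A D.
Proof. move=> [f hf] [g hg]; exists (g \oc f); exact: iso_comp. Qed.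

Lemma zero_codom_eq (Z : C) : is_zero_obj Z -> forall A (f g : Hom A Z), f = g.
Proof. by case. Qed.
Lemma zero_dom_eq (Z : C) : is_zero_obj Z -> forall A (f g : Hom Z A), f = g.
Proof. by case. Qed.
Lemma zero_idm (Z : C) : is_zero_obj Z -> idm Z = 0.
Proof. by move=> [h _]; apply: h. Qed.
Lemma idm_zero (Z : C) : idm Z = 0 -> is_zero_obj Z.
Proof.
move=> e; split=> A f g.
  by rewrite -(comp1l f) -(comp1l g) e !comp0l.
by rewrite -(comp1r f) -(comp1r g) e !comp0r.
Qed.
Lemma zero_is_iso (Z Z' : C) (f : Hom Z Z') : is_zero_obj Z -> is_zero_obj Z' -> is_iso f.
Proof. by move=> h h'; exists 0; split; apply: zero_dom_eq. Qed.
Lemma zero_isomorphic (Z Z' : C) : is_zero_obj Z -> is_zero_obj Z' -> isomorphic Z Z'.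
Proof. by move=> h h'; exists 0; apply: zero_is_iso. Qed.

Lemma biprodE (A B D : C) i1 i2 p1 p2 : @biprod C A B D i1 i2 p1 p2 ->
  (p1 \oc i1 = idm A) * (p2 \oc i2 = idm B) * (p1 \oc i2 = 0) * (p2 \oc i1 = 0) *
  (forall X (f : Hom X A), p1 \oc (i1 \oc f) = f) *
  (forall X (f : Hom X B), p2 \oc (i2 \oc f) = f) *
  (forall X (f : Hom X B), p1 \oc (i2 \oc f) = 0) *
  (forall X (f : Hom X A), p2 \oc (i1 \oc f) = 0).
Proof.
case=> e1 e2 e3 e4 e5; do !split => //.
- by move=> X f; rewrite compoA e1 comp1l.
- by move=> X f; rewrite compoA e2 comp1l.
- by move=> X f; rewrite compoA e3 comp0l.
- by move=> X f; rewrite compoA e4 comp0l.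
Qed.

Ltac bsimp := repeat (progress cnorm
  || match goal with H : biprod _ _ _ _ |- _ => progress rewrite ?(biprodE H) end).

Lemma biprod_ext (A B D E : C) i1 i2 p1 p2 : @biprod C A B D i1 i2 p1 p2 ->
  forall (f g : Hom D E), f \oc i1 = g \oc i1 -> f \oc i2 = g \oc i2 -> f = g.
Proof.
case=> _ _ _ _ e f g h1 h2.
by rewrite -(comp1r f) -(comp1r g) -e !compDr !compoA h1 h2.
Qed.

Lemma biprodC (A B D : C) i1 i2 p1 p2 :
  @biprod C A B D i1 i2 p1 p2 -> @biprod C B A D i2 i1 p2 p1.
Proof. by case=> e1 e2 e3 e4 e5; split => //; rewrite addrC. Qed.

Lemma biprodr0 (A Z : C) : is_zero_obj Z -> @biprod C A Z A (idm A) 0 (idm A) 0.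
Proof.
move=> hz; split; rewrite ?comp1l ?comp0l ?comp0r ?addr0 //.
exact: (zero_dom_eq hz).
Qed.

Lemma biprod_zero (A B D : C) i1 i2 p1 p2 :
  @biprod C A B D i1 i2 p1 p2 -> is_zero_obj A -> is_zero_obj B -> is_zero_obj D.
Proof.
move=> [_ _ _ _ e] hA hB; apply: idm_zero.
by rewrite -e -(comp1r i1) -(comp1r i2) (zero_idm hA) (zero_idm hB) !comp0r !comp0l addr0.
Qed.

Lemma biprod_inl_iso (A B D : C) i1 i2 p1 p2 :
  @biprod C A B D i1 i2 p1 p2 -> is_zero_obj B -> is_iso i1.
Proof.
move=> [e1 e2 e3 e4 e5] hz; exists p1; split=> //.
by rewrite -e5 -(comp1r i2) (zero_idm hz) comp0r comp0l addr0.
Qed.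

Lemma biprod_iso (A B D A' B' D' : C) i1 i2 p1 p2 j1 j2 q1 q2 :
  @biprod C A B D i1 i2 p1 p2 -> @biprod C A' B' D' j1 j2 q1 q2 ->
  isomorphic A A' -> isomorphic B B' -> isomorphic D D'.
Proof.
move=> H1 H2 [f [f' [e1 e2]]] [g [g' [e3 e4]]].
have cancel_l (X Y : C) (u : Hom X Y) (v : Hom Y X) :
  v \oc u = idm X -> forall W (w : Hom W X), v \oc (u \oc w) = w.
  by move=> e W w; rewrite compoA e comp1l.
exists (j1 \oc f \oc p1 + j2 \oc g \oc p2), (i1 \oc f' \oc q1 + i2 \oc g' \oc q2); split.
  apply: (biprod_ext H1); bsimp;
    by rewrite ?(e1, e2, e3, e4, cancel_l _ _ _ _ e1, cancel_l _ _ _ _ e3); bsimp.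
apply: (biprod_ext H2); bsimp;
  by rewrite ?(e1, e2, e3, e4, cancel_l _ _ _ _ e2, cancel_l _ _ _ _ e4); bsimp.
Qed.

(* Both D and D' are a (+) b (+) W, bracketed differently. *)
Lemma biprod_exchange (a b W E D E' D' : C) i1 i2 p1 p2 j1 j2 q1 q2 k1 k2 r1 r2 m1 m2 s1 s2 :
  @biprod C a E D i1 i2 p1 p2 -> @biprod C b W E j1 j2 q1 q2 ->
  @biprod C a W E' k1 k2 r1 r2 -> @biprod C b E' D' m1 m2 s1 s2 -> isomorphic D D'.
Proof.
move=> H1 H2 H3 H4.
exists (m2 \oc k1 \oc p1 + m1 \oc q1 \oc p2 + m2 \oc k2 \oc q2 \oc p2).
exists (i1 \oc r1 \oc s2 + i2 \oc j1 \oc s1 + i2 \oc j2 \oc r2 \oc s2); split.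
  apply: (biprod_ext H1); first by bsimp.
  by apply: (biprod_ext H2); bsimp.
apply: (biprod_ext H4); first by bsimp.
by apply: (biprod_ext H3); bsimp.
Qed.

Record bsum_data (A B : C) := BsumData {
  bpo : C; bi1 : Hom A bpo; bi2 : Hom B bpo; bp1 : Hom bpo A; bp2 : Hom bpo B;
  bpP : biprod bi1 bi2 bp1 bp2 }.

Lemma exists_bsum_data (A B : C) : exists b : bsum_data A B, True.
Proof.
case: HC => _ _ _ _ [_ /(_ A B) [D [i1 [i2 [p1 [p2 H]]]]]].
by exists (BsumData H).
Qed.
Definition bsumd (A B : C) : bsum_data A B := proj1_sig (cid (exists_bsum_data A B)).
Definition bsum (A B : C) : C := bpo (bsumd A B).
Lemma bsumP (A B : C) :
  biprod (bi1 (bsumd A B)) (bi2 (bsumd A B)) (bp1 (bsumd A B)) (bp2 (bsumd A B)).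
Proof. exact: bpP. Qed.

Lemma exists_zero_obj : exists Z : C, is_zero_obj Z.
Proof. by case: HC => _ _ _ _ [[Z hZ] _]; exists Z. Qed.
Definition zobj : C := proj1_sig (cid exists_zero_obj).
Lemma zobjP : is_zero_obj zobj.
Proof. exact: (proj2_sig (cid exists_zero_obj)). Qed.

Lemma biprod_bsum (A B D : C) i1 i2 p1 p2 :
  @biprod C A B D i1 i2 p1 p2 -> isomorphic D (bsum A B).
Proof. by move=> H; apply: (biprod_iso H (bsumP A B)); apply: iso_refl. Qed.
Lemma bsum_iso (A A' B B' : C) :
  isomorphic A A' -> isomorphic B B' -> isomorphic (bsum A B) (bsum A' B').
Proof. exact: biprod_iso (bsumP A B) (bsumP A' B'). Qed.
Lemma bsumC (A B : C) : isomorphic (bsum A B) (bsum B A).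
Proof. exact: biprod_bsum (biprodC (bsumP A B)). Qed.
Lemma bsumCA (a b W : C) : isomorphic (bsum a (bsum b W)) (bsum b (bsum a W)).
Proof. exact: biprod_exchange (bsumP a (bsum b W)) (bsumP b W) (bsumP a W) (bsumP b (bsum a W)). Qed.
Lemma bsumA (A B W : C) : isomorphic (bsum A (bsum B W)) (bsum (bsum A B) W).
Proof.
apply: iso_trans (bsum_iso (iso_refl A) (bsumC B W)) _.
exact: iso_trans (bsumCA _ _ _) (bsumC _ _).
Qed.
Lemma bsumr0 (A Z : C) : is_zero_obj Z -> isomorphic (bsum A Z) A.
Proof. by move=> hz; apply: iso_sym; apply: biprod_bsum (biprodr0 A hz). Qed.
Lemma bsum0r (A Z : C) : is_zero_obj Z -> isomorphic (bsum Z A) A.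
Proof. by move=> hz; apply: iso_trans (bsumC _ _) (bsumr0 _ hz). Qed.

Fixpoint bigsum (l : seq C) : C := if l is a :: l' then bsum a (bigsum l') else zobj.

Lemma bigsum1 (a : C) : isomorphic (bigsum [:: a]) a.
Proof. exact: bsumr0 zobjP. Qed.
Lemma bigsum_cat (l1 l2 : seq C) :
  isomorphic (bigsum (l1 ++ l2)) (bsum (bigsum l1) (bigsum l2)).
Proof.
elim: l1 => [|a l1 IH] /=; first exact: iso_sym (bsum0r _ zobjP).
exact: iso_trans (bsum_iso (iso_refl a) IH) (bsumA _ _ _).
Qed.
Lemma bigsum_catl m1 m2 l :
  isomorphic (bigsum m1) (bigsum m2) -> isomorphic (bigsum (m1 ++ l)) (bigsum (m2 ++ l)).
Proof.
move=> h; apply: iso_trans (bigsum_cat _ _) _; apply: iso_trans _ (iso_sym (bigsum_cat _ _)).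
exact: bsum_iso h (iso_refl _).
Qed.
Lemma bigsum_catr l m1 m2 :
  isomorphic (bigsum m1) (bigsum m2) -> isomorphic (bigsum (l ++ m1)) (bigsum (l ++ m2)).
Proof.
move=> h; apply: iso_trans (bigsum_cat _ _) _; apply: iso_trans _ (iso_sym (bigsum_cat _ _)).
exact: bsum_iso (iso_refl _) h.
Qed.
Lemma bigsum_mid l1 b l2 :
  isomorphic (bigsum (l1 ++ b :: l2)) (bsum b (bigsum (l1 ++ l2))).
Proof.
elim: l1 => [|c l1 IH] /=; first exact: iso_refl.
exact: iso_trans (bsum_iso (iso_refl c) IH) (bsumCA _ _ _).
Qed.

Definition all_prop (I : Type) (Pr : I -> Prop) (s : seq I) : Prop :=
  foldr (fun i acc => Pr i /\ acc) True s.

Lemma all_prop_cat (I : Type) (Pr : I -> Prop) s1 s2 :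
  all_prop Pr s1 -> all_prop Pr s2 -> all_prop Pr (s1 ++ s2).
Proof. by elim: s1 => [|a s1 IH] //= [h1 h2] h3; split => //; apply: IH. Qed.
Lemma all_prop_iota (Pr : nat -> Prop) m l :
  (forall i, (m <= i < m + l)%N -> Pr i) -> all_prop Pr (iota m l).
Proof.
elim: l m => [|l IH] m h //=; split; first by apply: h; lia.
by apply: IH => i hi; apply: h; lia.
Qed.
Lemma all_prop_nseq (I : Type) (Pr : I -> Prop) k a : Pr a -> all_prop Pr (nseq k a).
Proof. by move=> h; elim: k. Qed.
Lemma bigsum_mem (P : C -> Prop) : P zobj -> (forall A B, P A -> P B -> P (bsum A B)) ->
  forall l, all_prop P l -> P (bigsum l).
Proof. by move=> P0 PD; elim=> [|a l IH] //= [ha hl]; apply: PD => //; apply: IH. Qed.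

Definition isoind (A B : C) : int := if `[< isomorphic A B >] then 1 else 0.
Definition feq (x y : Formal C) := forall B, fcoef x B = fcoef y B.

Lemma isoind_iso (A A' B : C) : isomorphic A A' -> isoind A B = isoind A' B.
Proof.
move=> h; rewrite /isoind.
case: (asboolP (isomorphic A B)) => hB; case: (asboolP (isomorphic A' B)) => hB' //.
- by case: hB'; exact: iso_trans (iso_sym h) hB.
- by case: hB; exact: iso_trans h hB'.
Qed.
Lemma isoind_refl (A : C) : isoind A A = 1.
Proof. by rewrite /isoind; case: asboolP => // []; case; apply: iso_refl. Qed.
Lemma isoind_ge0 (A B : C) : 0 <= isoind A B.
Proof. by rewrite /isoind; case: ifP. Qed.

Lemma fcoefE (x : Formal C) B : fcoef x B = \sum_(p <- x) p.1 * isoind p.2 B.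
Proof. by apply: eq_bigr => p _; rewrite /isoind; case: ifP; rewrite ?mulr1 ?mulr0. Qed.
Lemma fcoef_nil B : fcoef ([::] : Formal C) B = 0.
Proof. by rewrite /fcoef big_nil. Qed.
Lemma fcoef_cons p (x : Formal C) B : fcoef (p :: x) B = p.1 * isoind p.2 B + fcoef x B.
Proof. by rewrite !fcoefE big_cons. Qed.
Lemma fcoef_cat (x y : Formal C) B : fcoef (x ++ y) B = fcoef x B + fcoef y B.
Proof. by rewrite /fcoef big_cat. Qed.
Lemma fcoef_neg (x : Formal C) B : fcoef (fneg x) B = - fcoef x B.
Proof. by rewrite !fcoefE big_map -sumrN; apply: eq_bigr => p _ /=; rewrite mulNr. Qed.
Lemma fcoef1 (m : int) (A : C) B : fcoef [:: (m, A)] B = m * isoind A B.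
Proof. by rewrite fcoef_cons fcoef_nil addr0. Qed.
Lemma fcoef_terms (I : Type) (s : seq I) (f : I -> int * C) B :
  fcoef (map f s) B = \sum_(i <- s) fcoef [:: f i] B.
Proof. by rewrite fcoefE big_map; apply: eq_bigr => i _; rewrite fcoef_cons fcoef_nil addr0. Qed.

Definition scale (m : int) (z : Formal C) : Formal C := [seq (m * p.1, p.2) | p <- z].
Lemma fcoef_scale m z B : fcoef (scale m z) B = m * fcoef z B.
Proof. by rewrite !fcoefE big_map mulr_sumr; apply: eq_bigr => p _ /=; rewrite mulrA. Qed.

Definition fsubgroup (Q : Formal C -> Prop) :=
  [/\ Q [::], (forall x y, Q x -> Q y -> Q (x ++ y)), (forall x, Q x -> Q (fneg x))
    & (forall x y, feq x y -> Q x -> Q y)].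

Section Subgroup.
Variable Q : Formal C -> Prop.
Hypothesis HQ : fsubgroup Q.

Lemma fsub_nil : Q [::]. Proof. by case: HQ. Qed.
Lemma fsub_cat x y : Q x -> Q y -> Q (x ++ y). Proof. by case: HQ => _ h _ _; apply: h. Qed.
Lemma fsub_neg x : Q x -> Q (fneg x). Proof. by case: HQ => _ _ h _; apply: h. Qed.
Lemma fsub_feq x y : feq x y -> Q x -> Q y. Proof. by case: HQ => _ _ _ h; apply: h. Qed.
Lemma fsub_feqV x y : feq x y -> Q y -> Q x.
Proof. by move=> e; apply: fsub_feq => B; rewrite e. Qed.
Lemma fsub_sub x y : Q x -> Q y -> Q (x ++ fneg y).
Proof. by move=> hx hy; apply: fsub_cat => //; apply: fsub_neg. Qed.
Lemma fsub_0 x : (forall B, fcoef x B = 0) -> Q x.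
Proof. by move=> e; apply: fsub_feqV fsub_nil => B; rewrite e fcoef_nil. Qed.

Lemma fsub_scale m z : Q z -> Q (scale m z).
Proof.
move=> hz.
have hpos k : Q (scale k%:Z z).
  elim: k => [|k IH]; first by apply: fsub_0 => B; rewrite fcoef_scale mul0r.
  apply: fsub_feqV (fsub_cat IH hz) => B.
  by rewrite fcoef_scale fcoef_cat fcoef_scale -[k.+1]addn1 PoszD mulrDl mul1r.
case: m => k; first exact: hpos.
apply: fsub_feqV (fsub_neg (hpos k.+1)) => B.
by rewrite fcoef_scale fcoef_neg fcoef_scale NegzE mulNr.
Qed.

Lemma fsub_sum_in (I : Type) (s : seq I) (f : I -> Formal C) x (Pr : I -> Prop) :
  (forall i, Pr i -> Q (f i)) -> all_prop Pr s ->
  (forall B, fcoef x B = \sum_(i <- s) fcoef (f i) B) -> Q x.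
Proof.
move=> hf hs e.
have ef : feq x (flatten [seq f i | i <- s]).
  move=> B; rewrite e; elim: (s) => [|i s' IH]; first by rewrite big_nil /= fcoef_nil.
  by rewrite big_cons /= fcoef_cat IH.
apply: fsub_feqV ef _; elim: s hs {e} => [|i s IH] /= => [_|[hi hs]]; first exact: fsub_nil.
exact: fsub_cat (hf i hi) (IH hs).
Qed.
Lemma fsub_sum (I : Type) (s : seq I) (f : I -> Formal C) x :
  (forall i, Q (f i)) -> (forall B, fcoef x B = \sum_(i <- s) fcoef (f i) B) -> Q x.
Proof.
move=> hf; apply: (@fsub_sum_in I s f x (fun _ => True)) => //.
by elim: s.
Qed.
End Subgroup.

Inductive fspan (g : Formal C -> Prop) : Formal C -> Prop :=
  | fspan_gen x : g x -> fspan g x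
  | fspan_nil : fspan g [::]
  | fspan_cat x y : fspan g x -> fspan g y -> fspan g (x ++ y)
  | fspan_neg x : fspan g x -> fspan g (fneg x)
  | fspan_feq x y : feq x y -> fspan g x -> fspan g y.

Lemma fspan_subgroup g : fsubgroup (fspan g).
Proof. split; [exact: fspan_nil | exact: fspan_cat | exact: fspan_neg | exact: fspan_feq]. Qed.
Lemma fspan_min (g Q : Formal C -> Prop) :
  fsubgroup Q -> (forall x, g x -> Q x) -> forall x, fspan g x -> Q x.
Proof.
move=> HQ hg x; elim=> {x} [x /hg //||x y _ hx _ hy|x _ hx|x y e _ hx].
- exact: fsub_nil.
- exact: fsub_cat.
- exact: fsub_neg.
- exact: fsub_feq e hx.
Qed.

Definition fobjs (l : seq C) : Formal C := [seq (1%:Z, a) | a <- l].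

Lemma fcoef_fobjs l B : fcoef (fobjs l) B = \sum_(a <- l) isoind a B.
Proof. by rewrite fcoefE big_map; apply: eq_bigr => a _ /=; rewrite mul1r. Qed.
Lemma fcoef_fobjs_ge0 l B : 0 <= fcoef (fobjs l) B.
Proof. by rewrite fcoef_fobjs; apply: sumr_ge0 => a _; apply: isoind_ge0. Qed.
Lemma fobjs_cat l1 l2 B :
  fcoef (fobjs (l1 ++ l2)) B = fcoef (fobjs l1) B + fcoef (fobjs l2) B.
Proof. by rewrite /fobjs map_cat fcoef_cat. Qed.
Lemma fobjs_cons a l B : fcoef (fobjs (a :: l)) B = isoind a B + fcoef (fobjs l) B.
Proof. by rewrite fcoef_cons mul1r. Qed.
Lemma fobjs_nil B : fcoef (fobjs [::]) B = 0.
Proof. exact: fcoef_nil. Qed.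
Lemma fobjs_nseq k a B : fcoef (fobjs (nseq k a)) B = k%:Z * isoind a B.
Proof.
rewrite fcoef_fobjs; elim: k => [|k IH]; first by rewrite big_nil mul0r.
by rewrite /= big_cons IH -addn1 PoszD mulrDl mul1r addrC.
Qed.

Lemma fobjs_split l a : fcoef (fobjs l) a != 0 ->
  exists l1 b l2, l = l1 ++ b :: l2 /\ isomorphic b a.
Proof.
elim: l => [|c l IH]; first by rewrite fobjs_nil eqxx.
rewrite fobjs_cons /isoind; case: asboolP => [h _|_]; first by exists [::], c, l.
by rewrite add0r => /IH [l1 [b [l2 [-> h]]]]; exists (c :: l1), b, l2.
Qed.

Lemma bigsum_perm l l' : feq (fobjs l) (fobjs l') -> isomorphic (bigsum l) (bigsum l').
Proof.
elim: l l' => [|a l IH] l' e.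
  case: l' e => [|b l'] e; first exact: iso_refl.
  have := e b; rewrite fobjs_nil fobjs_cons isoind_refl => /eqP.
  by rewrite eq_sym paddr_eq0 ?ler01 ?fcoef_fobjs_ge0 // oner_eq0.
have : fcoef (fobjs l') a != 0.
  rewrite -e fobjs_cons isoind_refl; apply: lt0r_neq0.
  by apply: ltr_wpDr; [exact: fcoef_fobjs_ge0 | exact: ltr01].
case/fobjs_split=> l1 [b [l2 [el' hb]]]; subst l'.
apply: iso_trans (iso_sym (bigsum_mid _ _ _)); apply: bsum_iso; first exact: iso_sym.
apply: IH => B; apply: (@addrI _ (isoind a B)).
by rewrite -fobjs_cons e fobjs_cat fobjs_cons fobjs_cat (isoind_iso _ hb) addrCA.
Qed.

Lemma formal_split (z : Formal C) : exists lp ln,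
  (forall B, fcoef z B = fcoef (fobjs lp) B - fcoef (fobjs ln) B) /\
  (forall Pr, all_prop (Pr \o snd) z -> all_prop Pr lp /\ all_prop Pr ln).
Proof.
elim: z => [|[m a] z [lp [ln [e hP]]]].
  by exists [::], [::]; split=> // B; rewrite !fcoef_nil subr0.
case: m => k.
  exists (nseq k a ++ lp), ln; split.
    by move=> B; rewrite fcoef_cons e fobjs_cat fobjs_nseq /=; ring.
  move=> Pr [ha hz]; have [h1 h2] := hP Pr hz.
  by split=> //; apply: all_prop_cat => //; apply: all_prop_nseq.
exists lp, (nseq k.+1 a ++ ln); split.
  by move=> B; rewrite fcoef_cons e fobjs_cat fobjs_nseq /= NegzE; ring.
move=> Pr [ha hz]; have [h1 h2] := hP Pr hz.
by split=> //; apply: all_prop_cat => //; apply: all_prop_nseq.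
Qed.

Definition off_class (A : C) (q : int * C) : bool := ~~ `[< isomorphic q.2 A >].

Lemma fcoef_off_class (x : Formal C) (A B : C) :
  fcoef (filter (off_class A) x) B = if `[< isomorphic B A >] then 0 else fcoef x B.
Proof.
rewrite /fcoef big_filter; case: (asboolP (isomorphic B A)) => hBA.
  rewrite big1 // => q hq; case: asboolP => // h.
  by case/asboolP: hq; exact: iso_trans h hBA.
rewrite [in RHS](bigID (off_class A)) /= [X in _ = _ + X]big1 ?addr0 // => q.
rewrite negbK => /asboolP hq; case: asboolP => // h.
by case: hBA; exact: iso_trans (iso_sym h) hq.
Qed.

Lemma sum_in_class (f : C -> int) (A : C) (z : Formal C) :
  (forall A', isomorphic A' A -> f A' = f A) ->
  \sum_(q <- z | ~~ off_class A q) q.1 * f q.2 = f A * fcoef z A.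
Proof.
move=> hf; rewrite /fcoef mulr_sumr big_mkcond /=; apply: eq_bigr => q _.
by rewrite /off_class negbK; case: asboolP => h; rewrite ?mulr0 // (hf _ h) mulrC.
Qed.

Lemma off_class_shrink (x y : Formal C) : x ++ y <> [::] -> exists A,
  (size (filter (off_class A) x) + size (filter (off_class A) y) < size x + size y)%N.
Proof.
have size_le A (z : Formal C) : (size (filter (off_class A) z) <= size z)%N.
  by rewrite size_filter count_size.
have size_lt (p : int * C) z : (size (filter (off_class p.2) (p :: z)) < size (p :: z))%N.
  by rewrite /= /off_class asboolT ?ltnS ?size_le //; apply: iso_refl.
case: x => [|p x] /= hxy; last first.
  by exists p.2; rewrite -addSn; apply: leq_add; [exact: size_lt | exact: size_le].
case: y hxy => [|p y] // _; exists p.2; exact: size_lt.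
Qed.

(* Strong induction, removing one isomorphism class at a time from both sums. *)
Lemma sum_iso_invariant (f : C -> int) : (forall A A', isomorphic A A' -> f A = f A') ->
  forall x y, feq x y -> \sum_(q <- x) q.1 * f q.2 = \sum_(q <- y) q.1 * f q.2.
Proof.
move=> hf x y; have [k] := ubnP (size x + size y); elim: k x y => // k IH x y hk e.
have [|/nilP /off_class_shrink [A hA]] := boolP (nilp (x ++ y)).
  by rewrite cat_nilp => /andP [/nilP -> /nilP ->].
have hfA A' : isomorphic A' A -> f A' = f A by apply: hf.
rewrite (bigID (off_class A)) [in RHS](bigID (off_class A)) /= !sum_in_class // e.
congr (_ + _); rewrite -[LHS](big_filter x) -[RHS](big_filter y).
apply: IH; first by apply: leq_trans hA _; rewrite -ltnS.
by move=> B; rewrite !fcoef_off_class e.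
Qed.

Definition split_gen (z : Formal C) : Prop :=
  exists A B D i1 i2 p1 p2, @biprod C A B D i1 i2 p1 p2 /\ z = [:: (1, D); (-1, A); (-1, B)].
Definition Split := fspan split_gen.

Lemma split_subgroup : fsubgroup Split. Proof. exact: fspan_subgroup. Qed.

Lemma split_biprod (A B D : C) i1 i2 p1 p2 : @biprod C A B D i1 i2 p1 p2 ->
  Split [:: (1, D); (-1, A); (-1, B)].
Proof. by move=> h; apply: fspan_gen; exists A, B, D, i1, i2, p1, p2. Qed.

Lemma split_zero (Z : C) (m : int) : is_zero_obj Z -> Split [:: (m, Z)].
Proof.
move=> hz; have := split_biprod (biprodr0 Z hz).
move=> /(fsub_neg split_subgroup) /(fsub_scale split_subgroup m) h.
apply: (fsub_feq split_subgroup _ h) => B.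
rewrite fcoef_scale fcoef_neg !fcoef_cons fcoef_nil /=; ring.
Qed.

Lemma split_trans x y z : Split (x ++ fneg y) -> Split (y ++ fneg z) -> Split (x ++ fneg z).
Proof.
move=> h1 h2; apply: (fsub_feq split_subgroup _ (fsub_cat split_subgroup h1 h2)) => B.
rewrite !fcoef_cat !fcoef_neg; ring.
Qed.

Section Nangulated.
Variable S : Shift C.
Hypothesis HS : shift_ok S.

Lemma shm1 (A : C) : shm S (idm A) = idm (S A).
Proof. by case: HS. Qed.
Lemma shmM (A B D : C) (g : Hom B D) (f : Hom A B) : shm S (g \oc f) = shm S g \oc shm S f.
Proof. by case: HS => _ h _ _ _; apply: h. Qed.
Lemma shmD (A B : C) (f g : Hom A B) : shm S (f + g) = shm S f + shm S g.
Proof. by case: HS => _ _ h _ _; apply: h. Qed.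
Lemma shm0 (A B : C) : shm S (0 : Hom A B) = 0.
Proof. by apply: (addrI (shm S (0 : Hom A B))); rewrite -shmD !addr0. Qed.
Lemma shm_zero (Z : C) : is_zero_obj Z -> is_zero_obj (S Z).
Proof. by move=> hz; apply: idm_zero; rewrite -shm1 (zero_idm hz) shm0. Qed.
Lemma shm_biprod (A B D : C) i1 i2 p1 p2 : @biprod C A B D i1 i2 p1 p2 ->
  biprod (shm S i1) (shm S i2) (shm S p1) (shm S p2).
Proof.
by case=> e1 e2 e3 e4 e5; split; rewrite -?shmM -?shmD ?e1 ?e2 ?e3 ?e4 ?e5 ?shm1 ?shm0.
Qed.

Variable n : nat.
Variable N : nsigseq S n -> Prop.
Hypothesis HN : nangulation (fun _ => True) N.
Hypothesis n3 : (3 <= n)%N.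
Local Notation L := n.-2.+1.

Lemma seq_inT (X : nsigseq S n) : seq_in (fun _ => True) X.
Proof. by []. Qed.

Lemma N_triv (X : nsigseq S n) : is_triv X -> N X.
Proof. by case: HN => _ [_ [_ [_ h]]] _ _ _; apply: h. Qed.
Lemma N_rot (X Y : nsigseq S n) : is_rot X Y -> (N X <-> N Y).
Proof. by case: HN => _ _ [_ h] _ _; apply: h. Qed.
Lemma N_dsum (X Y Z : nsigseq S n) : N X -> N Y -> is_dsum X Y Z -> N Z.
Proof. by case: HN => _ [_ [h _]] _ _ _; apply: h. Qed.

Lemma smor_id (X : nsigseq S n) : is_smor (X:=X) (Y:=X) (fun i => idm (ob X i)).
Proof. by split; [move=> i _; rewrite comp1l comp1r | rewrite shm1 comp1l comp1r]. Qed.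
Lemma smor_comp (X Y Z : nsigseq S n) phi psi :
  is_smor (X:=X) (Y:=Y) phi -> is_smor (X:=Y) (Y:=Z) psi ->
  is_smor (X:=X) (Y:=Z) (fun i => psi i \oc phi i).
Proof.
move=> [h1 h2] [h3 h4]; split.
  by move=> i hi; rewrite compoA h3 // -compoA h1 // compoA.
by rewrite compoA h4 -compoA h2 compoA shmM.
Qed.

(* [pair_seq k Y] is 0 -> ... -> 0 -> Y =Y-> Y -> 0 -> ... -> 0 with the two copies of Y
   at positions k and k+1, i.e. the k-fold rotation of the trivial n-angle of Y. *)
Definition at_pair (k i : nat) : bool := (i == k) || (i == k.+1).
Definition id_or_zero (Y : C) (a b : bool) : Hom (if a then Y else zobj) (if b then Y else zobj) :=
  match a, b with true, true => idm Y | _, _ => 0 end.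
Definition pair_seq (k : nat) (Y : C) : nsigseq S n :=
  {| ob := fun i => if at_pair k i then Y else zobj;
     mor := fun i => id_or_zero Y (at_pair k i) (at_pair k i.+1);
     lst := 0 |}.

Lemma pair_seq_zero k Y i : i != k -> i != k.+1 -> is_zero_obj (ob (pair_seq k Y) i).
Proof. by move=> h1 h2; rewrite /= /at_pair (negbTE h1) (negbTE h2); apply: zobjP. Qed.
Lemma pair_seq_at k Y : ob (pair_seq k Y) k = Y.
Proof. by rewrite /= /at_pair eqxx. Qed.
Lemma pair_seq_succ k Y : ob (pair_seq k Y) k.+1 = Y.
Proof. by rewrite /= /at_pair eqxx orbT. Qed.

Lemma pair_seq0_N Y : N (pair_seq 0 Y).
Proof.
apply: N_triv; split; first exact: iso_id.
by move=> i /andP [h2 _]; apply: pair_seq_zero; lia.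
Qed.

Lemma pair_seq_rot k Y : (k.+1 < L)%N -> is_rot (pair_seq k.+1 Y) (pair_seq k Y).
Proof.
move=> hk; have zL : is_zero_obj (ob (pair_seq k Y) L) by apply: pair_seq_zero; lia.
exists (fun i => idm (ob (pair_seq k Y) i)), 0; split.
- by move=> i _; exact: iso_id.
- exact: zero_is_iso zL (shm_zero zobjP).
- by move=> i _; rewrite comp1l comp1r.
- exact: (zero_codom_eq (shm_zero zobjP)).
- exact: (zero_dom_eq zL).
Qed.

Lemma pair_seq_N k Y : (k < L)%N -> N (pair_seq k Y).
Proof.
elim: k => [|k IH] hk; first exact: pair_seq0_N.
by apply/(N_rot (pair_seq_rot Y hk)); apply: IH; apply: ltnW.
Qed.

Definition di1 (X Y : nsigseq S n) i := bi1 (bsumd (ob X i) (ob Y i)).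
Definition di2 (X Y : nsigseq S n) i := bi2 (bsumd (ob X i) (ob Y i)).
Definition dp1 (X Y : nsigseq S n) i := bp1 (bsumd (ob X i) (ob Y i)).
Definition dp2 (X Y : nsigseq S n) i := bp2 (bsumd (ob X i) (ob Y i)).
Definition dsum (X Y : nsigseq S n) : nsigseq S n :=
  {| ob := fun i => bsum (ob X i) (ob Y i);
     mor := fun i => di1 X Y i.+1 \oc mor X i \oc dp1 X Y i
                     + di2 X Y i.+1 \oc mor Y i \oc dp2 X Y i;
     lst := shm S (di1 X Y 0) \oc lst X \oc dp1 X Y L
            + shm S (di2 X Y 0) \oc lst Y \oc dp2 X Y L |}.

Lemma dsumP (X Y : nsigseq S n) i : biprod (di1 X Y i) (di2 X Y i) (dp1 X Y i) (dp2 X Y i).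
Proof. exact: bsumP. Qed.

Lemma dsum_is_dsum X Y : is_dsum X Y (dsum X Y).
Proof.
have h0 := dsumP X Y 0; have hL := dsumP X Y L; have hs := shm_biprod (dsumP X Y 0).
exists (di1 X Y), (di2 X Y), (dp1 X Y), (dp2 X Y).
split; last by move=> i _; apply: dsumP.
all: split; last by bsimp.
all: by move=> i _ /=; have := dsumP X Y i; have := dsumP X Y i.+1; move=> ? ?; bsimp.
Qed.

Lemma dsum_N X Y : N X -> N Y -> N (dsum X Y).
Proof. by move=> hX hY; apply: N_dsum hX hY (dsum_is_dsum X Y). Qed.

Lemma dsum_smor_inl X Y : is_smor (X:=X) (Y:=dsum X Y) (di1 X Y).
Proof.
have h0 := dsumP X Y 0; have hL := dsumP X Y L; have hs := shm_biprod (dsumP X Y 0).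
split; last by bsimp.
by move=> i _ /=; have := dsumP X Y i; have := dsumP X Y i.+1; move=> ? ?; bsimp.
Qed.

Lemma fcoef_chi (X : nsigseq S n) B :
  fcoef (chi X) B = \sum_(i <- iota 0 n) (-1) ^+ i * isoind (ob X i) B.
Proof. by rewrite fcoefE big_map. Qed.

Lemma split_chi_dsum X Y : Split (chi (dsum X Y) ++ fneg (chi X ++ chi Y)).
Proof.
apply: (fsub_sum split_subgroup (s := iota 0 n) (f := fun i =>
  scale ((-1) ^+ i) [:: (1, ob (dsum X Y) i); (-1, ob X i); (-1, ob Y i)])).
  by move=> i; apply: (fsub_scale split_subgroup); exact: split_biprod (dsumP X Y i).
move=> B; rewrite fcoef_cat fcoef_neg fcoef_cat !fcoef_chi opprD -!sumrN -!big_split.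
by apply: eq_bigr => i _; rewrite fcoef_scale !fcoef_cons fcoef_nil /=; ring.
Qed.

Lemma split_chi_pair_seq k Y : (k < L)%N -> Split (chi (pair_seq k Y)).
Proof.
move=> hk.
have en : iota 0 n = iota 0 k ++ [:: k; k.+1] ++ iota k.+2 (n - k.+2)%N.
  have e : n = (k + (2 + (n - k.+2)))%N by lia.
  by rewrite {1}e !iotaD /= add0n addn2.
apply: (fsub_sum_in split_subgroup (s := iota 0 k ++ iota k.+2 (n - k.+2)%N)
   (f := fun i => [:: ((-1) ^+ i, ob (pair_seq k Y) i)])
   (Pr := fun i => is_zero_obj (ob (pair_seq k Y) i))).
- by move=> i hi; apply: split_zero.
- by apply: all_prop_cat; apply: all_prop_iota => i hi; apply: pair_seq_zero; lia.
- move=> B; rewrite fcoef_chi en !big_cat !big_cons big_nil pair_seq_at pair_seq_succ /=.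
  under [in RHS]eq_bigr do rewrite fcoef1.
  under [X in _ = _ + X]eq_bigr do rewrite fcoef1.
  rewrite exprS; ring.
Qed.

Lemma pad_at (X : nsigseq S n) k Y : N X -> (k < L)%N ->
  [/\ N (dsum X (pair_seq k Y)),
      Split (chi (dsum X (pair_seq k Y)) ++ fneg (chi X)),
      forall i, (i < k)%N -> is_iso (di1 X (pair_seq k Y) i)
    & forall i, (i < k)%N -> isomorphic (ob (dsum X (pair_seq k Y)) i) (ob X i)].
Proof.
move=> hX hk; split.
- exact: dsum_N hX (pair_seq_N Y hk).
- have h := fsub_cat split_subgroup (split_chi_dsum X (pair_seq k Y)) (split_chi_pair_seq Y hk).
  by apply: (fsub_feq split_subgroup _ h) => B; rewrite !fcoef_cat !fcoef_neg !fcoef_cat; ring.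
- by move=> i hi; apply: biprod_inl_iso (dsumP _ _ i) _; apply: pair_seq_zero; lia.
- by move=> i hi; apply: bsumr0; apply: pair_seq_zero; lia.
Qed.

(* Density lets us replace the terms j, ..., j + d - 1 of an n-angle by objects of P,
   keeping the terms before j and changing the Euler characteristic only by split
   relations. *)
Lemma nangle_pad (P : C -> Prop) :
  (forall A B, isomorphic A B -> P A -> P B) -> (forall B, exists Y, P (bsum B Y)) ->
  forall j d (X : nsigseq S n), N X -> (j + d <= L)%N ->
  exists (X' : nsigseq S n) (phi : forall i, Hom (ob X i) (ob X' i)),
    [/\ N X', Split (chi X' ++ fneg (chi X)), is_smor phi,
        forall i, (i < j)%N -> is_iso (phi i)
      & forall i, (j <= i < j + d)%N -> P (ob X' i)].
Proof.
move=> Piso Pdense j; elim=> [|d IH] X hX hd.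
  exists X, (fun i => idm (ob X i)); split => //.
  - by apply: (fsub_0 split_subgroup) => B; rewrite fcoef_cat fcoef_neg subrr.
  - exact: smor_id.
  - by move=> i _; apply: iso_id.
  - by move=> i; lia.
have [|X1 [phi1 [hX1 hS1 hm1 hi1 hP1]]] := IH X hX; first by lia.
have [Y hY] := Pdense (ob X1 (j + d)).
have [|hN hS hiso hob] := pad_at Y hX1 (k := j + d); first by lia.
exists (dsum X1 (pair_seq (j + d) Y)), (fun i => di1 X1 (pair_seq (j + d) Y) i \oc phi1 i).
split => //.
- exact: split_trans hS hS1.
- exact: smor_comp hm1 (dsum_smor_inl _ _).
- by move=> i hi; apply: iso_comp (hi1 _ hi) (hiso _ _); lia.
- move=> i /andP [hji]; rewrite addnS ltnS leq_eqVlt => /orP [/eqP ->|hik].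
    by rewrite /= /at_pair eqxx.
  by apply: Piso (iso_sym (hob i hik)) (hP1 i _); lia.
Qed.

Lemma inR_subgroup : fsubgroup (inR N).
Proof. split; [exact: inR_nil | exact: inR_add | exact: inR_neg | exact: inR_eqF]. Qed.

Lemma k0_feq x y : feq x y -> k0eq N x y.
Proof. by move=> e; apply: (fsub_0 inR_subgroup) => B; rewrite fcoef_cat fcoef_neg e subrr. Qed.
Lemma k0_refl x : k0eq N x x.
Proof. exact: k0_feq. Qed.
Lemma k0_sym x y : k0eq N x y -> k0eq N y x.
Proof.
move=> h; apply: (fsub_feq inR_subgroup _ (fsub_neg inR_subgroup h)) => B.
by rewrite !fcoef_neg !fcoef_cat !fcoef_neg; ring.
Qed.
Lemma k0_trans x y z : k0eq N x y -> k0eq N y z -> k0eq N x z.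
Proof.
move=> h1 h2; apply: (fsub_feq inR_subgroup _ (fsub_cat inR_subgroup h1 h2)) => B.
by rewrite !fcoef_cat !fcoef_neg; ring.
Qed.
Lemma k0_cat x y x' y' : k0eq N x x' -> k0eq N y y' -> k0eq N (x ++ y) (x' ++ y').
Proof.
move=> h1 h2; apply: (fsub_feq inR_subgroup _ (fsub_cat inR_subgroup h1 h2)) => B.
by rewrite !fcoef_cat !fcoef_neg !fcoef_cat; ring.
Qed.
Lemma k0_neg x y : k0eq N x y -> k0eq N (fneg x) (fneg y).
Proof.
move=> h; apply: (fsub_feq inR_subgroup _ (fsub_neg inR_subgroup h)) => B.
by rewrite !fcoef_neg !fcoef_cat !fcoef_neg; ring.
Qed.

Lemma sum_signs m : \sum_(i <- iota 0 m) ((-1) ^+ i : int) = (odd m)%:Z.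
Proof.
elim: m => [|m IH]; first by rewrite big_nil.
rewrite -addn1 iotaD big_cat /= IH add0n big_seq1 -signr_odd addn1 /=.
by case: (odd m).
Qed.

Hypothesis nodd : odd n.

Lemma inR_zobj : inR N [:: (1, zobj)].
Proof.
have h := inR_chi (pair_seq0_N zobj); apply: (fsub_feq inR_subgroup _ h) => B.
rewrite fcoef_chi fcoef1 mul1r.
have e i : isoind (ob (pair_seq 0 zobj) i) B = isoind zobj B by rewrite /=; case: ifP.
under eq_bigr do rewrite e.
by rewrite -mulr_suml sum_signs nodd mul1r.
Qed.
Lemma inR_zero (Z : C) (m : int) : is_zero_obj Z -> inR N [:: (m, Z)].
Proof.
move=> hz; apply: (fsub_feq inR_subgroup _ (fsub_scale inR_subgroup m inR_zobj)) => B.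
by rewrite fcoef_scale !fcoef1 (isoind_iso _ (zero_isomorphic zobjP hz)) mul1r.
Qed.

(* Witness: the sum of the rotated trivial n-angles A -> A -> 0 ... and 0 -> B -> B -> 0 ...,
   whose terms are A, A (+) B, B, 0, ..., 0 up to isomorphism. *)
Lemma inR_biprod (A B D : C) i1 i2 p1 p2 : @biprod C A B D i1 i2 p1 p2 ->
  inR N [:: (1, D); (-1, A); (-1, B)].
Proof.
move=> hb; have hL : (1 < L)%N by lia.
pose W := dsum (pair_seq 0 A) (pair_seq 1 B).
have hW : inR N (chi W) := inR_chi (dsum_N (pair_seq_N A (ltnW hL)) (pair_seq_N B hL)).
have en : iota 0 n = [:: 0; 1; 2] ++ iota 3 (n - 3)%N.
  by rewrite -[in LHS](subnKC n3) iotaD.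
have hrest : inR N [seq ((-1) ^+ i, ob W i) | i <- iota 3 (n - 3)%N].
  apply: (fsub_sum_in inR_subgroup (f := fun i => [:: ((-1) ^+ i, ob W i)])
     (Pr := fun i => (3 <= i)%N)); last exact: fcoef_terms.
  - move=> i hi; apply: inR_zero; apply: (biprod_zero (dsumP _ _ i)); apply: pair_seq_zero; lia.
  - by apply: all_prop_iota => i; lia.
have e0 : isomorphic (ob W 0) A by apply: bsumr0; apply: pair_seq_zero.
have e1 : isomorphic (ob W 1) D by exact: iso_sym (biprod_bsum hb).
have e2 : isomorphic (ob W 2) B by apply: bsum0r; apply: pair_seq_zero.
apply: (fsub_feq inR_subgroup _ (fsub_neg inR_subgroup (fsub_sub inR_subgroup hW hrest))) => B0.
rewrite fcoef_neg fcoef_cat fcoef_neg fcoef_chi en big_cat fcoefE big_map.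
rewrite !big_cons big_nil !fcoef_cons fcoef_nil /=.
rewrite (isoind_iso _ e0) (isoind_iso _ e1) (isoind_iso _ e2) addrK; ring.
Qed.

(* Rotating the trivial n-angle of A gives A -> 0 -> ... -> 0 -> Sigma A -(-1)-> Sigma A;
   its last object is [Sigma A] only up to the isomorphism [e], since [L < L] does not
   reduce for an abstract [n]. *)
Lemma inR_shift A : inR N [:: (1, A); (1, S A)].
Proof.
pose Y_ob i := if (i < L)%N then (if i == 0 then A else zobj) else S A.
have [e he] : isomorphic (Y_ob L) (S A) by rewrite /Y_ob ltnn; exact: iso_refl.
pose Y : nsigseq S n := {| ob := Y_ob; mor := fun _ => 0; lst := - e |}.
have hY : N Y.
  apply/(N_rot (X := pair_seq 0 A)); first last; first exact: pair_seq0_N.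
  exists (fun i => match i return Hom (Y_ob i) (ob (pair_seq 0 A) i.+1) with
                   | 0 => idm A | _.+1 => 0 end), e; split => //.
  - case=> [_|i hi]; first exact: iso_id.
    by apply: zero_is_iso; [rewrite /= /Y_ob hi; apply: zobjP | apply: pair_seq_zero].
  - by move=> i hi; apply: (zero_codom_eq zobjP).
  - by rewrite /= comp0r comp0l.
  - by rewrite nodd /= shm1 compNl compNr !comp1l.
have en : iota 0 n = [:: 0%N] ++ iota 1 (n - 2)%N ++ [:: L].
  have e' : n = (1 + ((n - 2) + 1))%N by lia.
  by rewrite {1}e' !iotaD /=; congr (_ :: _ ++ [:: _]); lia.
have hrest : inR N [seq ((-1) ^+ i, ob Y i) | i <- iota 1 (n - 2)%N].
  apply: (fsub_sum_in inR_subgroup (f := fun i => [:: ((-1) ^+ i, ob Y i)])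
     (Pr := fun i => (1 <= i < L)%N)); last exact: fcoef_terms.
  - move=> i /andP [h1 h2]; apply: inR_zero; rewrite /= /Y_ob h2.
    by case: eqP => [e'|_]; [lia | exact: zobjP].
  - by apply: all_prop_iota => i; lia.
have hL : ~~ odd L by move: nodd n3; case: (n) => [|[|m]] //= h _; rewrite negbK.
apply: (fsub_feq inR_subgroup _ (fsub_sub inR_subgroup (inR_chi hY) hrest)) => B0.
rewrite fcoef_cat fcoef_neg fcoef_chi en !big_cat fcoefE big_map.
rewrite !big_cons !big_nil !fcoef_cons fcoef_nil /=.
rewrite (isoind_iso _ (ex_intro _ e he)) -[(-1) ^+ L]signr_odd (negbTE hL) expr0.
have -> : Y_ob 0 = A by [].
set s0 := \sum_(i <- iota 1 (n - 2)) _; ring.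
Qed.

Lemma k0_bsum (A B : C) : k0eq N [:: (1, A); (1, B)] [:: (1, bsum A B)].
Proof.
apply: (fsub_feq inR_subgroup _ (fsub_neg inR_subgroup (inR_biprod (bsumP A B)))) => B0.
by rewrite fcoef_neg fcoef_cat fcoef_neg !fcoef_cons fcoef_nil /=; ring.
Qed.

Lemma k0_bigsum l : k0eq N (fobjs l) [:: (1, bigsum l)].
Proof.
elim: l => [|a l IH] /=.
  apply: (fsub_feq inR_subgroup _ (fsub_neg inR_subgroup inR_zobj)) => B0.
  by rewrite fcoef_cat /= fcoef_nil add0r.
have h := fsub_sub inR_subgroup IH (inR_biprod (bsumP a (bigsum l))).
apply: (fsub_feq inR_subgroup _ h) => B0.
by rewrite !fcoef_cat !fcoef_neg !fcoef_cons !fcoef_nil /=; ring.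
Qed.

Lemma k0_term_bigsum (m : int) a : exists l, k0eq N [:: (m, a)] (fobjs l).
Proof.
case: m => k.
  by exists (nseq k a); apply: k0_feq => B0; rewrite fcoef1 fobjs_nseq.
exists (nseq k.+1 (S a)).
have h := fsub_neg inR_subgroup (fsub_scale inR_subgroup k.+1 (inR_shift a)).
apply: (fsub_feq inR_subgroup _ h) => B0.
rewrite fcoef_neg fcoef_scale fcoef_cat fcoef_neg fobjs_nseq !fcoef_cons fcoef_nil /=.
by rewrite NegzE; ring.
Qed.

Lemma k0_class_obj x : exists A, k0eq N x [:: (1, A)].
Proof.
elim: x => [|[m a] x [A IH]].
  exists zobj; apply: (fsub_feq inR_subgroup _ (fsub_neg inR_subgroup inR_zobj)) => B0.
  by rewrite fcoef_cat /= fcoef_nil add0r.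
have [l hl] := k0_term_bigsum m a.
exists (bsum (bigsum l) A).
change (k0eq N ([:: (m, a)] ++ x) [:: (1, bsum (bigsum l) A)]).
exact: k0_trans (k0_cat (k0_trans hl (k0_bigsum l)) IH) (k0_bsum _ _).
Qed.

Section Cancellation.
Variable P : C -> Prop.
Hypothesis Piso : forall A B, isomorphic A B -> P A -> P B.
Hypothesis P0 : P zobj.
Hypothesis Pbsum : forall A B, P A -> P B -> P (bsum A B).
Hypothesis Pdense : forall B, exists Y, P (bsum B Y).
Hypothesis Pcompl : complete N P.

(* Completeness applied to the n-angle A -> A (+) B -> B -> 0 -> ... -> 0. *)
Lemma P_cancel A B : P (bsum A B) -> P B -> P A.
Proof.
move=> hAB hB; have hL : (1 < L)%N by lia.
pose W := dsum (pair_seq 0 A) (pair_seq 1 B).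
have hW : N W := dsum_N (pair_seq_N A (ltnW hL)) (pair_seq_N B hL).
have Pz Z : is_zero_obj Z -> P Z by move=> hz; apply: Piso P0; apply: zero_isomorphic zobjP hz.
have h0 : P (ob W 0).
  apply: (Pcompl hW) => // i hi hne.
  have [-> | [-> | h3]] : i = 1%N \/ i = 2 \/ (2 < i)%N by lia.
  - exact: hAB.
  - by apply: Piso hB; apply: iso_sym; apply: bsum0r; apply: pair_seq_zero.
  - by apply: Pz; apply: (biprod_zero (dsumP _ _ i)); apply: pair_seq_zero; lia.
by apply: Piso h0; apply: bsumr0; apply: pair_seq_zero.
Qed.

Definition stably_balanced (z : Formal C) : Prop :=
  forall lp ln, (forall B, fcoef z B = fcoef (fobjs lp) B - fcoef (fobjs ln) B) ->
  exists c1 c2, [/\ P c1, P c2 & isomorphic (bigsum (lp ++ [:: c1])) (bigsum (ln ++ [:: c2]))].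

Lemma stably_balanced_cat x y :
  stably_balanced x -> stably_balanced y -> stably_balanced (x ++ y).
Proof.
move=> hx hy lp ln e.
have [lpx [lnx [ex _]]] := formal_split x; have [lpy [lny [ey _]]] := formal_split y.
have [c1x [c2x [h1x h2x isx]]] := hx _ _ ex.
have [c1y [c2y [h1y h2y isy]]] := hy _ _ ey.
have [W hW] := Pdense (bigsum (lnx ++ lny)).
have Pc a b : P a -> P b -> P (bigsum ((lnx ++ lny) ++ [:: W; a; b])).
  move=> ha hb; rewrite -cat1s catA; apply: Piso (iso_sym (bigsum_cat _ _)) _.
  apply: Pbsum; last by apply: (bigsum_mem P0 Pbsum).
  apply: Piso (iso_sym (bigsum_cat _ _)) _.
  exact: Piso (bsum_iso (iso_refl _) (iso_sym (bigsum1 W))) hW.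
exists (bigsum ((lnx ++ lny) ++ [:: W; c1x; c1y])), (bigsum ((lnx ++ lny) ++ [:: W; c2x; c2y])).
split; [exact: Pc | exact: Pc|].
apply: iso_trans (bigsum_catr _ (bigsum1 _)) _.
apply: iso_trans _ (bigsum_catr _ (iso_sym (bigsum1 _))).
have e1 : feq (fobjs (lp ++ (lnx ++ lny) ++ [:: W; c1x; c1y]))
              (fobjs ((lpx ++ [:: c1x]) ++ (lpy ++ [:: c1y]) ++ ln ++ [:: W])).
  by move=> B; move: (e B); rewrite fcoef_cat ex ey !fobjs_cat !fobjs_cons fobjs_nil; lia.
apply: iso_trans (bigsum_perm e1) _; apply: iso_trans (bigsum_catl _ isx) _.
have e2 : feq (fobjs ((lnx ++ [:: c2x]) ++ (lpy ++ [:: c1y]) ++ ln ++ [:: W]))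
              (fobjs ((lpy ++ [:: c1y]) ++ (lnx ++ [:: c2x]) ++ ln ++ [:: W])).
  by move=> B; rewrite !fobjs_cat; ring.
apply: iso_trans (bigsum_perm e2) _; apply: iso_trans (bigsum_catl _ isy) _.
by apply: bigsum_perm => B; rewrite !fobjs_cat !fobjs_cons fobjs_nil; ring.
Qed.

Lemma stably_balanced_subgroup : fsubgroup stably_balanced.
Proof.
split.
- move=> lp ln e; exists zobj, zobj; split => //; apply: bigsum_perm => B.
  move: (e B); rewrite fcoef_nil => /eqP; rewrite eq_sym subr_eq0 => /eqP.
  by rewrite !fobjs_cat => ->.
- exact: stably_balanced_cat.
- move=> x hx lp ln e.
  have [|c1 [c2 [h1 h2 hiso]]] := hx ln lp.
    by move=> B; apply: oppr_inj; rewrite -[- fcoef x B]fcoef_neg e opprB.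
  by exists c2, c1; split => //; apply: iso_sym.
- by move=> x y e hx lp ln e'; apply: hx => B; rewrite e.
Qed.

Definition Pgen (z : Formal C) : Prop := split_gen z \/ exists A, P A /\ z = [:: (1, A)].
Definition Pspan := fspan Pgen.

Lemma split_gen_stably_balanced z : split_gen z -> stably_balanced z.
Proof.
move=> [A [B [D [i1 [i2 [p1 [p2 [hb ->]]]]]]]] lp ln e.
have [W hW] := Pdense (bsum A B).
have hc : P (bigsum [:: A; B; W]).
  apply: Piso (iso_sym (bigsum_cat [:: A; B] [:: W])) _.
  exact: Piso (bsum_iso (iso_sym (bsum_iso (iso_refl _) (bigsum1 _))) (iso_sym (bigsum1 W))) hW.
exists (bigsum [:: A; B; W]), (bigsum [:: A; B; W]); split => //.
apply: iso_trans (bigsum_catr _ (bigsum1 _)) _.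
apply: iso_trans _ (bigsum_catr _ (iso_sym (bigsum1 _))).
have e1 : feq (fobjs (lp ++ [:: A; B; W])) (fobjs (ln ++ [:: D; W])).
  by move=> B0; move: (e B0); rewrite !fcoef_cons fcoef_nil !fobjs_cat !fobjs_cons fobjs_nil /=; lia.
apply: iso_trans (bigsum_perm e1) _; apply: bigsum_catr => /=.
apply: iso_trans _ (iso_sym (bsumA _ _ _)).
exact: bsum_iso (biprod_bsum hb) (iso_refl _).
Qed.

Lemma obj_stably_balanced A : P A -> stably_balanced [:: (1, A)].
Proof.
move=> hA lp ln e; exists zobj, A; split => //.
apply: iso_trans (bigsum_catr lp (m2 := [::]) (bigsum1 zobj)) _.
rewrite cats0; apply: bigsum_perm => B0.
by move: (e B0); rewrite fobjs_cat !fobjs_cons !fobjs_nil; lia.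
Qed.

Lemma Pspan_stably_balanced z : Pspan z -> stably_balanced z.
Proof.
apply: fspan_min stably_balanced_subgroup _ z => {}z [hz|[A [hA ->]]].
  exact: split_gen_stably_balanced.
exact: obj_stably_balanced.
Qed.

Lemma Pspan_subgroup : fsubgroup Pspan. Proof. exact: fspan_subgroup. Qed.
Lemma split_Pspan x : Split x -> Pspan x.
Proof. by apply: fspan_min Pspan_subgroup _ x => z hz; apply: fspan_gen; left. Qed.
Lemma Pspan_obj (A : C) (m : int) : P A -> Pspan [:: (m, A)].
Proof.
move=> hA; have h := fspan_gen (or_intror (ex_intro _ A (conj hA erefl))) : Pspan _.
apply: (fsub_feq Pspan_subgroup _ (fsub_scale Pspan_subgroup m h)) => B.
by rewrite fcoef_scale !fcoef1 /=; ring.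
Qed.

Lemma Pspan_chi X : N X -> Pspan (chi X).
Proof.
move=> hX.
have [X' [phi [hX' hS _ _ hP]]] := nangle_pad Piso Pdense (j := 0) (d := L) hX (leqnn _).
have hPL : P (ob X' L) by apply: (Pcompl hX') => // i hi hne; apply: hP; lia.
have hX'z : Pspan (chi X').
  apply: (fsub_sum_in Pspan_subgroup (f := fun i => [:: ((-1) ^+ i, ob X' i)])
    (Pr := fun i => P (ob X' i))); last exact: fcoef_terms.
  - by move=> i hi; apply: Pspan_obj.
  - apply: all_prop_iota => i hi; case: (ltnP i L) => h; first by apply: hP; lia.
    by have -> : i = L by lia.
apply: (fsub_feq Pspan_subgroup _ (fsub_sub Pspan_subgroup hX'z (split_Pspan hS))) => B.
by rewrite !(fcoef_cat, fcoef_neg); ring.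
Qed.

Lemma Pspan_inR z : inR N z -> Pspan z.
Proof.
elim=> {z} [X hX|Z hn _||x y _ hx _ hy|x _ hx|x y e _ hx].
- exact: Pspan_chi.
- by rewrite nodd in hn.
- exact: (fsub_nil Pspan_subgroup).
- exact: (fsub_cat Pspan_subgroup hx hy).
- exact: (fsub_neg Pspan_subgroup hx).
- exact: (fsub_feq Pspan_subgroup e hx).
Qed.

Lemma ImK0_obj_mem A z : all_prop (P \o snd) z -> k0eq N [:: (1, A)] z -> P A.
Proof.
move=> hz /Pspan_inR /Pspan_stably_balanced hq.
have [lpz [lnz [ez hPz]]] := formal_split z; have [hp hn] := hPz P hz.
have [|c1 [c2 [h1 h2 hi]]] := hq (A :: lnz) lpz.
  by move=> B; rewrite fcoef_cat fcoef_neg ez fobjs_cons fcoef1 mul1r; ring.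
apply: (P_cancel (B := bigsum (lnz ++ [:: c1]))); last by apply: (bigsum_mem P0 Pbsum); apply: all_prop_cat.
by apply: Piso (iso_sym hi) _; apply: (bigsum_mem P0 Pbsum); apply: all_prop_cat.
Qed.
End Cancellation.

Section Tensor.
Variable T : TensorData S.
Hypothesis HT : tensor_nang T N.
Local Notation "A ** B" := (tobj T A B) (at level 30).

Lemma thom1 (A B : C) : thom T (idm A) (idm B) = idm (A ** B).
Proof. by case: HT => [[h _]] _ _ _ _; apply: h. Qed.
Lemma thomM (A B D A' B' D' : C) (g : Hom B D) (f : Hom A B) (g' : Hom B' D') (f' : Hom A' B') :
  thom T (g \oc f) (g' \oc f') = thom T g g' \oc thom T f f'.
Proof. by case: HT => [[_ [h _]]] _ _ _ _; apply: h. Qed.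
Lemma tens_l_N (A : C) X : N X -> N (tens_l T A X).
Proof. by case: HT => _ _ _ [h _] _ hX; case: (h A X hX). Qed.

Lemma tens_iso (A A' B B' : C) :
  isomorphic A A' -> isomorphic B B' -> isomorphic (A ** B) (A' ** B').
Proof.
move=> [f [f' [e1 e2]]] [g [g' [e3 e4]]].
by exists (thom T f g), (thom T f' g'); split; rewrite -thomM ?e1 ?e2 ?e3 ?e4 thom1.
Qed.
Lemma tensC (A B : C) : isomorphic (A ** B) (B ** A).
Proof. by exists (tsym T A B); case: HT => _ [_ [_ [_ [h _]]]] _ _ _; apply: h. Qed.
Lemma tens1 (A : C) : isomorphic (A ** tunit T) A.
Proof. by exists (tru T A); case: HT => _ [_ [_ [h _]]] _ _ _; apply: h. Qed.

Lemma fcoef_fmul (r x : Formal C) B :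
  fcoef (fmul T r x) B = \sum_(p <- r) \sum_(q <- x) (p.1 * q.1) * isoind (p.2 ** q.2) B.
Proof. by rewrite fcoefE /fmul big_allpairs_dep. Qed.

Lemma fmul_feqr r x y : feq x y -> feq (fmul T r x) (fmul T r y).
Proof.
move=> e B; rewrite !fcoef_fmul; apply: eq_bigr => p _.
under eq_bigr do rewrite -mulrA. under [RHS]eq_bigr do rewrite -mulrA.
rewrite -!mulr_sumr; congr (_ * _).
apply: (sum_iso_invariant (f := fun Q => isoind (p.2 ** Q) B)) => // A A' h.
by apply: isoind_iso; apply: tens_iso => //; apply: iso_refl.
Qed.
Lemma fmul_catr r x y : feq (fmul T r (x ++ y)) (fmul T r x ++ fmul T r y).
Proof.
move=> B; rewrite fcoef_cat !fcoef_fmul -big_split; apply: eq_bigr => p _.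
by rewrite big_cat.
Qed.
Lemma fmul_negr r x : feq (fmul T r (fneg x)) (fneg (fmul T r x)).
Proof.
move=> B; rewrite fcoef_neg !fcoef_fmul -sumrN; apply: eq_bigr => p _.
by rewrite big_map -sumrN; apply: eq_bigr => q _ /=; rewrite mulrN mulNr.
Qed.
Lemma fmul_nilr r : feq (fmul T r [::]) [::].
Proof. by move=> B; rewrite fcoef_fmul fcoef_nil big1 // => p _; exact: big_nil. Qed.
Lemma fmulC x y : feq (fmul T x y) (fmul T y x).
Proof.
move=> B; rewrite !fcoef_fmul exchange_big; apply: eq_bigr => q _; apply: eq_bigr => p _.
by congr (_ * _); [exact: mulrC | exact: isoind_iso (tensC _ _)].
Qed.
Lemma fmul_objs (A B : C) : feq (fmul T [:: (1, A)] [:: (1, B)]) [:: (1, A ** B)].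
Proof. by move=> B0; rewrite fcoef_fmul !big_cons !big_nil. Qed.

(* Relations are an ideal because [A (x) -] preserves n-angles. *)
Lemma inR_fmul r z : inR N z -> inR N (fmul T r z).
Proof.
elim=> {z} [X hX|Z hn _||x y _ hx _ hy|x _ hx|x y e _ hx].
- apply: (fsub_sum inR_subgroup (s := r) (f := fun p => scale p.1 (chi (tens_l T p.2 X)))).
    by move=> p; apply: (fsub_scale inR_subgroup); apply: inR_chi; apply: tens_l_N.
  move=> B; rewrite fcoef_fmul; apply: eq_bigr => p _.
  rewrite fcoef_scale fcoef_chi /chi big_map mulr_sumr; apply: eq_bigr => i _ /=.
  by rewrite mulrA.
- by rewrite nodd in hn.
- exact: (fsub_feqV inR_subgroup (fmul_nilr r) (fsub_nil inR_subgroup)).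
- exact: (fsub_feqV inR_subgroup (fmul_catr r x y) (fsub_cat inR_subgroup hx hy)).
- exact: (fsub_feqV inR_subgroup (fmul_negr r x) (fsub_neg inR_subgroup hx)).
- exact: (fsub_feq inR_subgroup (fmul_feqr r e) hx).
Qed.

Lemma k0_fmul x x' y y' : k0eq N x x' -> k0eq N y y' -> k0eq N (fmul T x y) (fmul T x' y').
Proof.
have k0_fmulr r z z' : k0eq N z z' -> k0eq N (fmul T r z) (fmul T r z').
  move=> h; apply: (fsub_feq inR_subgroup _ (inR_fmul r h)) => B.
  by rewrite fmul_catr !fcoef_cat fmul_negr.
move=> hx hy; apply: k0_trans (k0_fmulr x _ _ hy) _.
apply: k0_trans (k0_feq (fmulC _ _)) _; apply: k0_trans (k0_fmulr y' _ _ hx) _.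
exact: k0_feq (fmulC _ _).
Qed.

Lemma all_prop_fneg (Pr : C -> Prop) x :
  all_prop (Pr \o snd) x -> all_prop (Pr \o snd) (fneg x).
Proof. by elim: x => [|p x IH] //= [h1 h2]; split => //; apply: IH. Qed.
Lemma all_prop_fmul (Pr : C -> Prop) r x : tensor_ideal T Pr ->
  all_prop (Pr \o snd) x -> all_prop (Pr \o snd) (fmul T r x).
Proof.
move=> hI hx; rewrite /fmul; elim: r => [|p r IH] //=.
apply: all_prop_cat => //; elim: x hx {IH} => [|q x IH] //= [h1 h2].
by split; [exact: hI | exact: IH].
Qed.

Lemma cd_tensor_idealP (P : C -> Prop) : cd_tensor_ideal N T P ->
  [/\ forall A B, isomorphic A B -> P A -> P B, P zobj,
      forall A B, P A -> P B -> P (bsum A B), forall B, exists Y, P (bsum B Y)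
    & tensor_ideal T P /\ complete N P].
Proof.
case=> NA [[Piso [[Z [hZ PZ]] Pbsum] _ _ _] Pten Pc Pd]; split => //.
- by apply: Piso PZ; apply: zero_isomorphic hZ zobjP.
- move=> A B hA hB; have [D [i1 [i2 [p1 [p2 [hb hD]]]]]] := Pbsum A B hA hB.
  exact: Piso (biprod_bsum hb) hD.
- move=> B; have [A [B' [i1 [i2 [p1 [p2 [hA hb]]]]]]] := Pd B.
  by exists B'; apply: Piso hA; exact: biprod_bsum hb.
Qed.

Lemma ImK0_cd_ideal (P : C -> Prop) : cd_tensor_ideal N T P ->
  K0_ideal N T (ImK0 N P) /\ (forall A : C, AH (ImK0 N P) A <-> P A).
Proof.
case/cd_tensor_idealP=> Piso P0 Pbsum Pdense [Pten Pc]; split.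
  split.
  - by move=> x y hxy [z [hz e]]; exists z; split => //; apply: k0_trans (k0_sym hxy) e.
  - by exists [::]; split => //; apply: k0_refl.
  - move=> x y [z1 [h1 e1]] [z2 [h2 e2]]; exists (z1 ++ z2).
    by split; [exact: all_prop_cat | exact: k0_cat].
  - by move=> x [z [h e]]; exists (fneg z); split; [exact: all_prop_fneg | exact: k0_neg].
  - move=> r x [z [h e]]; exists (fmul T r z).
    by split; [exact: all_prop_fmul | exact: k0_fmul (k0_refl r) e].
move=> A; split; first by move=> [z [hz e]]; exact: ImK0_obj_mem hz e.
by move=> hA; exists [:: (1, A)]; split => //; apply: k0_refl.
Qed.

(* Every element of K_0(C) is the class of an object, so primality of Im K_0(P)
   reduces to tensor primality of P. *)
Lemma ImK0_cd_prime (P : C -> Prop) :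
  cd_tensor_ideal N T P -> tensor_prime T P -> proper_subcat P ->
  K0_prime N T (ImK0 N P) /\ (forall A : C, AH (ImK0 N P) A <-> P A).
Proof.
move=> hP hpr [A0 hA0]; have [hI hA] := ImK0_cd_ideal hP.
case/cd_tensor_idealP: hP => Piso _ _ _ [Pten _].
have hsat x y : k0eq N x y -> ImK0 N P x -> ImK0 N P y by case: hI => h _ _ _ _; apply: h.
split => //; split => //.
  by move/(hA (tunit T)) => hu; apply: hA0; apply: Piso (Pten _ A0 hu); exact: tens1.
move=> x y hxy.
have [A eA] := k0_class_obj x; have [B eB] := k0_class_obj y.
have /(hsat _ _ (k0_feq (fmul_objs A B)))/(hA (A ** B)) : ImK0 N P (fmul T [:: (1, A)] [:: (1, B)]).
  by apply: hsat hxy; exact: k0_fmul eA eB.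
case/hpr=> [hPA|hPB]; [left; apply: hsat (k0_sym eA) _ | right; apply: hsat (k0_sym eB) _].
  by apply/hA.
by apply/hA.
Qed.

Section IdealH.
Variable H : Formal C -> Prop.
Hypothesis HH : K0_ideal N T H.

Lemma H_k0eq x y : k0eq N x y -> H x -> H y.
Proof. by case: HH => h _ _ _ _; apply: h. Qed.
Lemma H_subgroup : fsubgroup H.
Proof. by case: HH => h1 h2 h3 h4 _; split => // x y e; apply: h1; apply: k0_feq. Qed.
Lemma H_k0_0 x : k0eq N x [::] -> H x.
Proof. by move=> e; apply: H_k0eq (k0_sym e) (fsub_nil H_subgroup). Qed.

Lemma AH_term A m : AH H A -> H [:: (m, A)].
Proof.
move=> h; apply: (fsub_feq H_subgroup _ (fsub_scale H_subgroup m h)) => B.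
by rewrite fcoef_scale !fcoef1 /=; ring.
Qed.
Lemma AH_iso A B : isomorphic A B -> AH H A -> AH H B.
Proof. by move=> h; apply: H_k0eq; apply: k0_feq => B0; rewrite !fcoef1 (isoind_iso _ h). Qed.
Lemma AH_zero Z : is_zero_obj Z -> AH H Z.
Proof.
move=> hz; apply: H_k0_0; apply: (fsub_feq inR_subgroup _ (inR_zero 1 hz)) => B.
by rewrite fcoef_cat fcoef_neg !fcoef1 fcoef_nil; ring.
Qed.
Lemma AH_bsum A B : AH H A -> AH H B -> AH H (bsum A B).
Proof. by move=> hA hB; apply: H_k0eq (k0_bsum A B) (fsub_cat H_subgroup hA hB). Qed.
Lemma AH_shift A : AH H A <-> AH H (S A).
Proof.
have h := fsub_neg inR_subgroup (inR_shift A).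
by split => hA; apply: (H_k0eq _ (fsub_neg H_subgroup hA));
  apply: (fsub_feq inR_subgroup _ h) => B;
  rewrite !(fcoef_cat, fcoef_neg, fcoef_cons, fcoef_nil) /=; ring.
Qed.
Lemma AH_dense B : AH H (bsum B (S B)).
Proof.
apply: H_k0_0; apply: k0_trans (k0_sym (k0_bsum B (S B))) _.
apply: (fsub_feq inR_subgroup _ (inR_shift B)) => B0.
by rewrite !(fcoef_cat, fcoef_neg, fcoef_cons, fcoef_nil) /=; ring.
Qed.
Lemma AH_tensor : tensor_ideal T (AH H).
Proof.
move=> A B hA; case: HH => _ _ _ _ hm.
exact: H_k0eq (k0_feq (fmul_objs B A)) (hm [:: (1, B)] _ hA).
Qed.

(* [(-1)^j [X_j]] is the difference of chi(X), which is 0 in K_0, and the other terms. *)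
Lemma AH_complete : complete N (AH H).
Proof.
move=> X hX j hj hP.
have en : iota 0 n = iota 0 j ++ j :: iota j.+1 (n - j.+1)%N.
  have e : n = (j + (1 + (n - j.+1)))%N by lia.
  by rewrite {1}e !iotaD /= add0n addn1.
have hy : H (chi X ++ fneg [:: ((-1) ^+ j, ob X j)]).
  apply: (fsub_sum_in H_subgroup (s := iota 0 j ++ iota j.+1 (n - j.+1)%N)
      (f := fun i => [:: ((-1) ^+ i, ob X i)]) (Pr := fun i => AH H (ob X i))).
  - by move=> i hi; apply: AH_term.
  - by apply: all_prop_cat; apply: all_prop_iota => i hi; apply: hP; lia.
  - move=> B; rewrite fcoef_cat fcoef_neg fcoef_chi en !big_cat big_cons fcoef1 /=.
    under [in RHS]eq_bigr do rewrite fcoef1.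
    under [X in _ = _ + X]eq_bigr do rewrite fcoef1.
    ring.
have hj' : H [:: ((-1) ^+ j, ob X j)].
  apply: (H_k0eq _ (fsub_neg H_subgroup hy)).
  apply: (fsub_feq inR_subgroup _ (fsub_neg inR_subgroup (inR_chi hX))) => B.
  by rewrite !(fcoef_cat, fcoef_neg); ring.
apply: (fsub_feq H_subgroup _ (fsub_scale H_subgroup ((-1) ^+ j) hj')) => B.
by rewrite fcoef_scale !fcoef1 /= mulrA -expr2 sqrr_sign.
Qed.

(* Complete [f] to an n-angle of C, then pad it with trivial n-angles (fixing the first
   two terms) until the middle terms lie in A_H; completeness puts the last one there. *)
Lemma AH_morphism_nangle (A B : C) (f : Hom A B) : AH H A -> AH H B ->
  exists X, restrN N (AH H) X /\ exists (u0 : Hom A (ob X 0%N)) (u1 : Hom B (ob X 1%N)),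
    [/\ is_iso u0, is_iso u1 & mor X 0%N \oc u0 = u1 \oc f].
Proof.
move=> hA hB; case: HN => _ _ [hcompl _] _ _.
have [X [hX [u0 [u1 [iu0 iu1 eu]]]]] := hcompl A B f I I.
have [|X' [phi [hX' _ [hm _] hiso hP]]] :=
  nangle_pad AH_iso (fun B => ex_intro _ (S B) (AH_dense B)) (j := 2) (d := L - 2) hX.
  by lia.
have hlow i : (i < L)%N -> AH H (ob X' i).
  move=> hi; case: (ltnP i 2) => h2; last by apply: hP; lia.
  have [-> | ->] : i = 0%N \/ i = 1%N by lia.
    by apply: AH_iso hA; exists (phi 0%N \oc u0); apply: iso_comp => //; exact: hiso.
  by apply: AH_iso hB; exists (phi 1%N \oc u1); apply: iso_comp => //; exact: hiso.
exists X'; split.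
  split => // i hi; case: (ltnP i L) => hiL; first exact: hlow.
  have -> : i = L by lia.
  by apply: (AH_complete hX') => // k hk hne; apply: hlow; lia.
exists (phi 0%N \oc u0), (phi 1%N \oc u1); split.
- by apply: iso_comp => //; apply: hiso.
- by apply: iso_comp => //; apply: hiso.
- by rewrite compoA hm // -compoA eu compoA.
Qed.

Lemma AH_nangulation : nangulation (AH H) (restrN N (AH H)).
Proof.
case: HN => _ [hiso [hsum [hsummand htriv]]] [_ hrot] h3 h4; split.
- by move=> X [].
- split; [|split; [|split]].
  + by move=> X Y hY [hX _] hs; split => //; exact: hiso (seq_inT _) hX hs.
  + by move=> X Y Z hZ [hX _] [hY _] hd; split => //; exact: hsum (seq_inT _) hX hY hd.
  + by move=> X Y Z hX hY [hZ _] hd; split => //; exact: hsummand (seq_inT _) (seq_inT _) hZ hd.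
  + by move=> X hX ht; split => //; exact: htriv (seq_inT _) ht.
- split; first exact: AH_morphism_nangle.
  move=> X Y hX hY hr; have e := hrot X Y (seq_inT _) (seq_inT _) hr.
  by split=> -[h _]; split => //; apply/e.
- by move=> X Y [hX _] [hY _] f0 f1 e; exact: h3 hX hY f0 f1 e.
- move=> X Y [hX _] [hY _] f0 f1 e; have [phi [h1 h2 h3' h4']] := h4 X Y hX hY f0 f1 e.
  by exists phi; split => // Z hZ hc; split => //; exact: h4' (seq_inT _) hc.
Qed.

Lemma AH_nsubcat : nsubcat_with N (AH H) (restrN N (AH H)).
Proof.
split.
- exact: AH_iso.
- split; first by exists zobj; split; [exact: zobjP | exact: AH_zero zobjP].
  move=> A B hA hB; exists (bsum A B), (bi1 (bsumd A B)), (bi2 (bsumd A B)).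
  exists (bp1 (bsumd A B)), (bp2 (bsumd A B)).
  by split; [exact: bsumP | exact: AH_bsum].
- exact: AH_shift.
- exact: AH_nangulation.
- exists (fun A => idm (S A)); split.
  + by move=> A _; apply: iso_id.
  + by move=> A B f _ _; rewrite comp1l comp1r.
  + by move=> [ob0 mor0 lst0] [hX _]; rewrite /twist /= comp1l.
Qed.

Lemma ImK0_AH x : ImK0 N (AH H) x <-> H x.
Proof.
split.
  move=> [z [hz e]]; apply: (H_k0eq (k0_sym e)).
  apply: (fsub_sum_in H_subgroup (s := z) (f := fun q => [:: q]) (Pr := fun q => AH H q.2)) => //.
    by case=> m a /= ha; apply: AH_term.
  by move=> B; rewrite /fcoef; apply: eq_bigr => q _; rewrite /fcoef big_cons big_nil addr0.
move=> hx; have [A eA] := k0_class_obj x.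
by exists [:: (1, A)]; split => //; split => //; apply: (H_k0eq eA hx).
Qed.

Lemma AH_cd_ideal :
  cd_tensor_ideal_with N T (AH H) (restrN N (AH H)) /\ (forall x, ImK0 N (AH H) x <-> H x).
Proof.
split; last exact: ImK0_AH.
split; [exact: AH_nsubcat | exact: AH_tensor | exact: AH_complete |].
move=> B; exists (bsum B (S B)), (S B), (bi1 (bsumd B (S B))), (bi2 (bsumd B (S B))).
exists (bp1 (bsumd B (S B))), (bp2 (bsumd B (S B))).
by split; [exact: AH_dense | exact: bsumP].
Qed.
End IdealH.

Lemma AH_cd_prime (H : Formal C -> Prop) : K0_prime N T H ->
  (cd_tensor_ideal_with N T (AH H) (restrN N (AH H)) /\ tensor_prime T (AH H)
     /\ proper_subcat (AH H))
  /\ (forall x, ImK0 N (AH H) x <-> H x).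
Proof.
case=> HH hI hpr; have [h1 h2] := AH_cd_ideal HH.
split => //; split => //; split; last by exists (tunit T).
move=> A B hAB; apply: hpr; apply: (H_k0eq HH _ hAB); apply: k0_feq => B0.
by rewrite fmul_objs.
Qed.
End Tensor.
End Nangulated.
End Additive.

Unset Implicit Arguments.
Theorem theorem5p2 (n : nat) (C : Cat) (S : Shift C) (N : nsigseq S n -> Prop)
    (T : TensorData S) :
  odd n -> (3 <= n)%N ->
  additive_cat C -> shift_ok S -> nangulation (fun _ => True) N ->
  tensor_nang T N ->
  (* (a) complete dense n-angulated tensor ideals <-> ideals of K_0(C) *)
  ((forall P : C -> Prop, cd_tensor_ideal N T P ->
      K0_ideal N T (ImK0 N P) /\ (forall A : C, AH (ImK0 N P) A <-> P A))
   /\ (forall H, K0_ideal N T H ->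
      cd_tensor_ideal_with N T (AH H) (restrN N (AH H))
      /\ (forall x, ImK0 N (AH H) x <-> H x)))
  /\
  (* (b) complete dense n-angulated tensor prime ideals <-> prime ideals *)
  ((forall P : C -> Prop, cd_tensor_ideal N T P -> tensor_prime T P -> proper_subcat P ->
      K0_prime N T (ImK0 N P) /\ (forall A : C, AH (ImK0 N P) A <-> P A))
   /\ (forall H, K0_prime N T H ->
      (cd_tensor_ideal_with N T (AH H) (restrN N (AH H)) /\ tensor_prime T (AH H) /\ proper_subcat (AH H))
      /\ (forall x, ImK0 N (AH H) x <-> H x))).
Proof.
move=> nodd n3 HC HS HN HT.
split; split.
- by move=> P hP; apply: ImK0_cd_ideal.
- by move=> H hH; apply: AH_cd_ideal.
- by move=> P hP hpr hpp; apply: ImK0_cd_prime.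
- by move=> H hH; apply: AH_cd_prime.
Qed.
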